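(* Let $q \in \mathbb{N}$. Suppose $\psi(\cdot,t)\in \mathcal{F}$ and set $\bar{\psi}(\cdot,t) := \Upsilon (\psi(\cdot,t))$ for all $t \in \mathbb{R}_+$. The following are equivalent. (i) $\psi(\cdot,t) \in \mathcal{D}^q$ for all $t \ge 0$, and $\psi \in C^q(\mathbb{R}_+^2,\mathbb{R}_+)^{I}$. (ii) $\bar{\psi}(\cdot,t) \in \bar{\mathcal{D}}^q$ for all $t \ge 0$, and $\bar{\psi} \in C^q(\mathbb{R}_+^2,\mathbb{R}_+)^{I}$.
   Context: Fix $I\in\mathbb{N}$. $\mathcal{C}=\{f\in C(\mathbb{R}_+,\mathbb{R}_+):f(0)=0,f\text{ non-decreasing}\}$, $\mathcal{C}^\uparrow=\{f\in\mathcal{C}:f\text{ strictly increasing},\lim_{u\to\infty}f(u)=\infty\}$. $\mathcal{C}^q=\{f\in\mathcal{C}:f^{\mathbb{R}}\in C^q(\mathbb{R},\mathbb{R})\}$ where $f^{\mathbb{R}}$ is the extension of $f$ by $0$ to $(-\infty,0)$. For $\psi\in\mathcal{C}^I$, $\phi_i(u)=u-\sum_{j=1}^I2(i\wedge j)\psi_j(u)$. $\mathcal{F}=\{\psi\in\mathcal{C}^I:\phi_I\in\mathcal{C}^\uparrow\}$ (then every $\phi_i\in\mathcal{C}^\uparrow$), $\Upsilon(\psi)_i=\psi_i\circ\phi_i^{-1}$. $\mathcal{D}=\{\psi\in\mathcal{F}:\sum_ii\sup_{u_1\neq u_2}\frac{\psi_i(u_1)-\psi_i(u_2)}{\phi_i(u_1)-\phi_i(u_2)}<\frac12\}$,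 $\bar{\mathcal{D}}=\{\bar\psi\in\mathcal{C}^I:\sum_ii\sup_{z_1\neq z_2}\frac{\bar\psi_i(z_1)-\bar\psi_i(z_2)}{z_1-z_2}<\frac12\}$, $\mathcal{D}^q=\mathcal{D}\cap(\mathcal{C}^q)^I$, $\bar{\mathcal{D}}^q=\bar{\mathcal{D}}\cap(\mathcal{C}^q)^I$. *)

From Stdlib Require Export Reals Lra ClassicalEpsilon List.
From Coquelicot Require Export Coquelicot.
Open Scope R_scope.

Fixpoint sumR (n : nat) (f : nat -> R) : R :=
  match n with O => 0 | S m => sumR m f + f (S m) end.

Fixpoint sumRbar (n : nat) (f : nat -> Rbar) : Rbar :=
  match n with O => Finite 0 | S m => Rbar_plus (sumRbar m f) (f (S m)) end.

Definition ext0 (f : R -> R) (u : R) : R := if Rle_dec 0 u then f u else 0.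

Definition Cq_R (q : nat) (g : R -> R) : Prop :=
  (forall k x, (k <= q)%nat -> ex_derive_n g k x) /\
  (forall x, continuous (Derive_n g q) x).

Definition Rp : R -> Prop := fun x => 0 <= x.

(* the class \mathcal{C} (values off R_+ are irrelevant) *)
Definition classC (f : R -> R) : Prop :=
  f 0 = 0 /\
  (forall u, 0 <= u -> 0 <= f u) /\
  (forall u, 0 <= u -> filterlim f (within Rp (locally u)) (locally (f u))) /\
  (forall u1 u2, 0 <= u1 -> u1 <= u2 -> f u1 <= f u2).

Definition classCup (f : R -> R) : Prop :=
  classC f /\
  (forall u1 u2, 0 <= u1 -> u1 < u2 -> f u1 < f u2) /\
  is_lim f p_infty p_infty.

Definition classCq (q : nat) (f : R -> R) : Prop :=
  classC f /\ Cq_R q (ext0 f).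

Definition phi (I : nat) (psi : nat -> R -> R) (i : nat) (u : R) : R :=
  u - sumR I (fun j => 2 * INR (Nat.min i j) * psi j u).

Definition inF (I : nat) (psi : nat -> R -> R) : Prop :=
  (forall i, (1 <= i <= I)%nat -> classC (psi i)) /\ classCup (phi I psi I).

(* inverse on R_+ (meaningful when f is a bijection of R_+) *)
Definition inv_Rp (f : R -> R) (y : R) : R :=
  epsilon (inhabits 0) (fun x => 0 <= x /\ f x = y).

Definition Upsilon (I : nat) (psi : nat -> R -> R) (i : nat) (z : R) : R :=
  psi i (inv_Rp (phi I psi i) z).

Definition supq (I : nat) (psi : nat -> R -> R) (i : nat) : Rbar :=
  Lub_Rbar (fun r => exists u1 u2, 0 <= u1 /\ 0 <= u2 /\ u1 <> u2 /\
     r = (psi i u1 - psi i u2) / (phi I psi i u1 - phi I psi i u2)).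

Definition supbar (f : R -> R) : Rbar :=
  Lub_Rbar (fun r => exists z1 z2, 0 <= z1 /\ 0 <= z2 /\ z1 <> z2 /\
     r = (f z1 - f z2) / (z1 - z2)).

Definition inD (I : nat) (psi : nat -> R -> R) : Prop :=
  inF I psi /\
  Rbar_lt (sumRbar I (fun i => Rbar_mult (INR i) (supq I psi i))) (Finite (1/2)).

Definition inDbar (I : nat) (pb : nat -> R -> R) : Prop :=
  (forall i, (1 <= i <= I)%nat -> classC (pb i)) /\
  Rbar_lt (sumRbar I (fun i => Rbar_mult (INR i) (supbar (pb i)))) (Finite (1/2)).

Definition inDq (q I : nat) (psi : nat -> R -> R) : Prop :=
  inD I psi /\ (forall i, (1 <= i <= I)%nat -> classCq q (psi i)).

Definition inDbarq (q I : nat) (pb : nat -> R -> R) : Prop :=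
  inDbar I pb /\ (forall i, (1 <= i <= I)%nat -> classCq q (pb i)).

(* C^q(R_+^2, R_+): one-sided partial derivatives within the closed quadrant *)
Definition quad (p : R * R) : Prop := 0 <= fst p /\ 0 <= snd p.

Definition pderiv_u (F : R -> R -> R) (u t v : R) : Prop :=
  filterlim (fun h => (F (u + h) t - F u t) / h)
    (within (fun h => h <> 0 /\ 0 <= u + h) (locally 0)) (locally v).

Definition pderiv_t (F : R -> R -> R) (u t v : R) : Prop :=
  filterlim (fun h => (F u (t + h) - F u t) / h)
    (within (fun h => h <> 0 /\ 0 <= t + h) (locally 0)) (locally v).

(* D l = mixed partial derivative along the directions in l (true = u, false = t),
   innermost derivative last in the list *)
Definition Cq_quad (q : nat) (g : R -> R -> R) : Prop :=
  (forall u t, 0 <= u -> 0 <= t -> 0 <= g u t) /\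
  exists D : list bool -> R -> R -> R,
    (forall u t, 0 <= u -> 0 <= t -> D nil u t = g u t) /\
    (forall l u t, (length l < q)%nat -> 0 <= u -> 0 <= t ->
        pderiv_u (D l) u t (D (true :: l) u t) /\
        pderiv_t (D l) u t (D (false :: l) u t)) /\
    (forall l u t, (length l <= q)%nat -> 0 <= u -> 0 <= t ->
        filterlim (fun p : R * R => D l (fst p) (snd p))
          (within quad (locally (u, t))) (locally (D l u t))).

(* For fixed t, phi_i(., t) is an increasing bijection of R_+ and psibar_i = psi_i o phi_i^-1, so the
   difference quotients of psi_i against phi_i are exactly those of psibar_i, and the smallness
   conditions defining D and Dbar coincide. Regularity is transported by the inverse function theorem.
   (i) => (ii): phi_i is C^q and the smallness condition gives d phi_i / du >= 1 - 2 sum_j j sup_j > 0,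
   so phi_i^-1 and psibar_i = psi_i o phi_i^-1 are C^q.
   (ii) => (i): with S_k = sum_(j >= k) psi_j one has phi_(k-1) = phi_k + 2 S_k and
   S_(k-1) = S_k + psibar_(k-1) o phi_(k-1). Iterating from S_I = psibar_I o phi_I down to phi_0 = id
   yields a C^q map G, built from the psibar_j alone, with G o phi_I = id and dG/dw >= 1. Hence
   phi_I = G^-1 and then every phi_i and psi_i = psibar_i o phi_i are C^q.
   Joint regularity on R_+^2 and regularity in u alone (the class C^q, for the extensions by 0) are
   the same argument, for functions of (u, t) on R_+ x R_+ and on R x R_+ respectively. *)

From Stdlib Require Import Lia Classical.

Definition dom (b : bool) (x : R) : Prop := if b then 0 <= x else True.

Definition near0 (P : R -> Prop) (Q : R -> Prop) : Prop :=
  exists d, 0 < d /\ forall h, Rabs h < d -> P h -> Q h.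

Definition near2 (b : bool) (u t : R) (Q : R * R -> Prop) : Prop :=
  exists d, 0 < d /\ forall p : R * R, dom b (fst p) -> 0 <= snd p ->
     Rabs (fst p - u) < d -> Rabs (snd p - t) < d -> Q p.

Global Instance near0_filter P : Filter (near0 P).
Proof.
  constructor.
  - exists 1; split; [lra|auto].
  - intros Q Q' [d1 [H1 K1]] [d2 [H2 K2]]. exists (Rmin d1 d2); split.
    + apply Rmin_pos; auto.
    + intros h Hh Ph; split; [apply K1|apply K2]; auto;
      eapply Rlt_le_trans; eauto; [apply Rmin_l|apply Rmin_r].
  - intros Q Q' HQ [d [H K]]. exists d; split; auto.
Qed.

Global Instance near2_filter b u t : Filter (near2 b u t).
Proof.
  constructor.
  - exists 1; split; [lra|auto].
  - intros Q Q' [d1 [H1 K1]] [d2 [H2 K2]]. exists (Rmin d1 d2); split.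
    + apply Rmin_pos; auto.
    + intros p Dp Tp Hu Ht; split; [apply K1|apply K2]; auto;
      eapply Rlt_le_trans; eauto; solve [apply Rmin_l|apply Rmin_r].
  - intros Q Q' HQ [d [H K]]. exists d; split; auto.
Qed.

Definition tends {T} (F : (T -> Prop) -> Prop) (f : T -> R) (v : R) : Prop :=
  forall eps, 0 < eps -> F (fun x => Rabs (f x - v) < eps).

Section Tends.
Context {T : Type} (F : (T -> Prop) -> Prop) {FF : Filter F}.

Lemma tends_filterlim f v : tends F f v <-> filterlim f F (locally v).
Proof.
  rewrite filterlim_locally. split.
  - intros H eps. exact (H eps (cond_pos eps)).
  - intros H e He. exact (H (mkposreal e He)).
Qed.

Lemma tends_const c : tends F (fun _ => c) c.
Proof. apply tends_filterlim, filterlim_const. Qed.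

Lemma tends_ext f g v : F (fun x => f x = g x) -> tends F f v -> tends F g v.
Proof.
  intros E H e He. generalize (filter_and _ _ E (H e He)). apply filter_imp.
  intros x [-> K]; auto.
Qed.

Lemma tends_plus f g a b : tends F f a -> tends F g b -> tends F (fun x => f x + g x) (a + b).
Proof.
  rewrite !tends_filterlim. intros Hf Hg.
  exact (filterlim_comp_2 _ _ Rplus Hf Hg (filterlim_plus a b)).
Qed.

Lemma tends_mult f g a b : tends F f a -> tends F g b -> tends F (fun x => f x * g x) (a * b).
Proof.
  rewrite !tends_filterlim. intros Hf Hg.
  exact (filterlim_comp_2 _ _ Rmult Hf Hg (filterlim_mult a b)).
Qed.

Lemma tends_scal c f a : tends F f a -> tends F (fun x => c * f x) (c * a).
Proof. apply tends_mult, tends_const. Qed.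

Lemma tends_inv f a : a <> 0 -> tends F f a -> tends F (fun x => / f x) (/ a).
Proof.
  rewrite !tends_filterlim. intros Ha Hf.
  apply (filterlim_comp _ _ _ f Rinv F (locally a)); auto.
  apply (filterlim_Rbar_inv (Finite a)). intros E; apply Ha; injection E; auto.
Qed.

(* For difference quotients [X = m B + C] whose factor [m] (a mean value point) is only known to
   approach [a]. *)
Lemma tends_affine_approx X B C a b c :
  tends F B b -> tends F C c ->
  (forall eps, 0 < eps ->
     F (fun x => exists m, Rabs (m - a) < eps /\ X x = m * B x + C x)) ->
  tends F X (a * b + c).
Proof.
  intros HB HC HX e He.
  set (K := Rabs b + 1).
  assert (HK : 0 < K) by (unfold K; generalize (Rabs_pos b); lra).
  set (A := Rabs a + 1).
  assert (HA : 0 < A) by (unfold A; generalize (Rabs_pos a); lra).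
  assert (e1 : 0 < e / (3 * K)) by (apply Rdiv_lt_0_compat; lra).
  assert (e2 : 0 < Rmin 1 (e / (3 * A))) by (apply Rmin_pos; [lra|apply Rdiv_lt_0_compat; lra]).
  generalize (filter_and _ _ (HX _ e1) (filter_and _ _ (HB _ e2) (HC (e / 3) ltac:(lra)))).
  apply filter_imp. intros x [[m [Hm ->]] [Hb Hc]].
  assert (Hb1 : Rabs (B x - b) < 1) by (eapply Rlt_le_trans; [apply Hb|apply Rmin_l]).
  assert (Hb2 : Rabs (B x - b) < e / (3 * A)) by (eapply Rlt_le_trans; [apply Hb|apply Rmin_r]).
  assert (HBx : Rabs (B x) <= K).
  { unfold K. replace (B x) with ((B x - b) + b) by ring.
    generalize (Rabs_triang (B x - b) b); lra. }
  replace (m * B x + C x - (a * b + c))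
    with ((m - a) * B x + (a * (B x - b) + (C x - c))) by ring.
  eapply Rle_lt_trans; [apply Rabs_triang|].
  eapply Rle_lt_trans; [apply Rplus_le_compat_l, Rabs_triang|].
  rewrite !Rabs_mult.
  assert (T1 : Rabs (m - a) * Rabs (B x) <= e / (3 * K) * K).
  { apply Rmult_le_compat; auto using Rabs_pos; lra. }
  assert (T2 : Rabs a * Rabs (B x - b) <= A * (e / (3 * A))).
  { apply Rmult_le_compat; auto using Rabs_pos; [unfold A; lra | lra]. }
  replace (e / (3 * K) * K) with (e / 3) in T1 by (field; lra).
  replace (A * (e / (3 * A))) with (e / 3) in T2 by (field; lra).
  lra.
Qed.

End Tends.

Section Near0.
Variable P : R -> Prop.
Hypothesis P_clusters_at0 : forall d, 0 < d -> exists h, Rabs h < d /\ P h.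

Lemma tends_near0_unique f a b : tends (near0 P) f a -> tends (near0 P) f b -> a = b.
Proof.
  intros Ha Hb. apply Rminus_diag_uniq, Rabs_eq_0.
  destruct (Rle_lt_or_eq_dec 0 (Rabs (a - b)) (Rabs_pos _)) as [Hp|Hp]; [|auto].
  exfalso. set (e := Rabs (a - b) / 2).
  destruct (Ha e ltac:(unfold e; lra)) as [d1 [Hd1 K1]].
  destruct (Hb e ltac:(unfold e; lra)) as [d2 [Hd2 K2]].
  destruct (P_clusters_at0 (Rmin d1 d2) (Rmin_pos _ _ Hd1 Hd2)) as [h [Hh Ph]].
  assert (A1 := K1 h (Rlt_le_trans _ _ _ Hh (Rmin_l _ _)) Ph).
  assert (A2 := K2 h (Rlt_le_trans _ _ _ Hh (Rmin_r _ _)) Ph).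
  generalize (Rabs_triang (f h - b) (a - f h)).
  replace (f h - b + (a - f h)) with (a - b) by ring.
  rewrite Rabs_minus_sym in A1. unfold e in *. lra.
Qed.

Lemma tends_near0_ge f a c : tends (near0 P) f a -> near0 P (fun h => c <= f h) -> c <= a.
Proof.
  intros Ha [d0 [Hd0 K0]]. apply Rnot_lt_le. intros Hlt.
  destruct (Ha (c - a) ltac:(lra)) as [d1 [Hd1 K1]].
  destruct (P_clusters_at0 (Rmin d0 d1) (Rmin_pos _ _ Hd0 Hd1)) as [h [Hh Ph]].
  assert (A0 := K0 h (Rlt_le_trans _ _ _ Hh (Rmin_l _ _)) Ph).
  assert (A1 := K1 h (Rlt_le_trans _ _ _ Hh (Rmin_r _ _)) Ph).
  apply Rabs_def2 in A1. lra.
Qed.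

End Near0.

Lemma near0_domain P : near0 P P.
Proof. exists 1; split; [lra|auto]. Qed.

Lemma near0_small P d : 0 < d -> near0 P (fun h => Rabs h < d).
Proof. intros Hd; exists d; split; auto. Qed.

(** * C^k functions of (u, t) *)

Definition adm_u (b : bool) (u h : R) : Prop := h <> 0 /\ dom b (u + h).
Definition adm_t (t h : R) : Prop := h <> 0 /\ 0 <= t + h.

Definition is_pderiv_u b (F : R -> R -> R) u t v :=
  tends (near0 (adm_u b u)) (fun h => (F (u + h) t - F u t) / h) v.
Definition is_pderiv_t (F : R -> R -> R) u t v :=
  tends (near0 (adm_t t)) (fun h => (F u (t + h) - F u t) / h) v.
Definition cont2 b (F : R -> R -> R) u t :=
  tends (near2 b u t) (fun p => F (fst p) (snd p)) (F u t).

Fixpoint Ck (b : bool) (k : nat) (F : R -> R -> R) : Prop :=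
  (forall u t, dom b u -> 0 <= t -> cont2 b F u t) /\
  match k with
  | O => True
  | S k' => exists Fu Ft : R -> R -> R,
      (forall u t, dom b u -> 0 <= t -> is_pderiv_u b F u t (Fu u t) /\ is_pderiv_t F u t (Ft u t)) /\
      Ck b k' Fu /\ Ck b k' Ft
  end.

Lemma dom_add b u h : dom b u -> 0 <= h -> dom b (u + h).
Proof. destruct b; simpl; auto; lra. Qed.

Lemma adm_u_clusters b u : dom b u -> forall d, 0 < d -> exists h, Rabs h < d /\ adm_u b u h.
Proof.
  intros Du d Hd. exists (d / 2). rewrite Rabs_pos_eq by lra.
  repeat split; try lra. apply dom_add; auto; lra.
Qed.

Lemma adm_t_clusters t : 0 <= t -> forall d, 0 < d -> exists h, Rabs h < d /\ adm_t t h.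
Proof. intros Dt d Hd. exists (d / 2). rewrite Rabs_pos_eq by lra. repeat split; lra. Qed.

Lemma is_pderiv_u_unique b F u t v w :
  dom b u -> is_pderiv_u b F u t v -> is_pderiv_u b F u t w -> v = w.
Proof. intros Du; apply tends_near0_unique, adm_u_clusters, Du. Qed.

Lemma is_pderiv_t_unique F u t v w :
  0 <= t -> is_pderiv_t F u t v -> is_pderiv_t F u t w -> v = w.
Proof. intros Dt; apply tends_near0_unique, adm_t_clusters, Dt. Qed.

Lemma cont2_slice_u b F u t : 0 <= t -> cont2 b F u t ->
  tends (near0 (adm_u b u)) (fun h => F (u + h) t) (F u t).
Proof.
  intros Ht H e He. destruct (H e He) as [d [Hd K]]. exists d; split; auto.
  intros h Hh [_ Dh]. apply (K (u + h, t)); simpl; auto.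
  - replace (u + h - u) with h by ring; auto.
  - rewrite Rminus_diag, Rabs_R0; auto.
Qed.

Lemma cont2_slice_t b F u t : dom b u -> cont2 b F u t ->
  tends (near0 (adm_t t)) (fun h => F u (t + h)) (F u t).
Proof.
  intros Du H e He. destruct (H e He) as [d [Hd K]]. exists d; split; auto.
  intros h Hh [_ Dh]. apply (K (u, t + h)); simpl; auto.
  - rewrite Rminus_diag, Rabs_R0; auto.
  - replace (t + h - t) with h by ring; auto.
Qed.

Section Extensionality.
Variables (b : bool) (F G : R -> R -> R).
Hypothesis FG : forall u t, dom b u -> 0 <= t -> F u t = G u t.

Lemma cont2_ext u t : dom b u -> 0 <= t -> cont2 b F u t -> cont2 b G u t.
Proof.
  intros Du Dt H e He. destruct (H e He) as [d [Hd K]]. exists d; split; auto.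
  intros p D1 D2 H1 H2. rewrite <- !FG; auto.
Qed.

Lemma is_pderiv_u_ext u t v : dom b u -> 0 <= t -> is_pderiv_u b F u t v -> is_pderiv_u b G u t v.
Proof.
  intros Du Dt H e He. destruct (H e He) as [d [Hd K]]. exists d; split; auto.
  intros h Hh [Hh0 Dh]. rewrite <- !FG; auto. apply K; auto. split; auto.
Qed.

Lemma is_pderiv_t_ext u t v : dom b u -> 0 <= t -> is_pderiv_t F u t v -> is_pderiv_t G u t v.
Proof.
  intros Du Dt H e He. destruct (H e He) as [d [Hd K]]. exists d; split; auto.
  intros h Hh [Hh0 Dh]. rewrite <- !FG; auto. apply K; auto. split; auto.
Qed.

Lemma Ck_ext k : Ck b k F -> Ck b k G.
Proof.
  destruct k as [|k]; simpl; intros [Hc Hd]; split; auto using cont2_ext.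
  destruct Hd as [Fu [Ft [HD [H1 H2]]]]. exists Fu, Ft; split; auto.
  intros u t Du Dt; destruct (HD u t Du Dt); split.
  - apply is_pderiv_u_ext; auto.
  - apply is_pderiv_t_ext; auto.
Qed.

End Extensionality.

Lemma Ck_cont b k F : Ck b k F -> forall u t, dom b u -> 0 <= t -> cont2 b F u t.
Proof. destruct k; simpl; tauto. Qed.

Lemma Ck_pred b k F : Ck b (S k) F -> Ck b k F.
Proof.
  revert F; induction k as [|k IH]; intros F [Hc Hd].
  - simpl; auto.
  - destruct Hd as [Fu [Ft [HD [H1 H2]]]]. split; auto.
    exists Fu, Ft; split; auto.
Qed.

(* Projecting onto [dom b] turns a function on [dom b] into one on R, to which [MVT_gen] applies. *)
Definition clamp (b : bool) (v : R) : R := if b then Rmax 0 v else v.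

Lemma clamp_dom b v : dom b (clamp b v).
Proof. destruct b; simpl; auto. apply Rmax_l. Qed.

Lemma clamp_id b v : dom b v -> clamp b v = v.
Proof. destruct b; simpl; auto. intros; apply Rmax_right; auto. Qed.

Lemma clamp_contract b y c : dom b c -> Rabs (clamp b y - c) <= Rabs (y - c).
Proof.
  destruct b; simpl; [|intros; lra]. intros Hc.
  unfold Rmax; destruct Rle_dec; unfold Rabs; repeat destruct Rcase_abs; lra.
Qed.

Lemma dom_between b x y c : dom b x -> dom b y -> Rmin x y <= c -> dom b c.
Proof.
  destruct b; simpl; auto. intros Hx Hy Hc. unfold Rmin in Hc; destruct Rle_dec; lra.
Qed.

Lemma Rabs_between x y c : Rmin x y <= c <= Rmax x y -> Rabs (c - x) <= Rabs (y - x).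
Proof.
  intros [H1 H2]. unfold Rmin, Rmax in *. destruct Rle_dec;
  repeat (rewrite Rabs_pos_eq by lra) || (rewrite Rabs_left1 by lra); lra.
Qed.

Lemma mean_value_u b F Fu t x y : 0 <= t -> dom b x -> dom b y ->
  (forall u, dom b u -> is_pderiv_u b F u t (Fu u t)) ->
  (forall u, dom b u -> cont2 b F u t) ->
  exists xi, dom b xi /\ Rmin x y <= xi <= Rmax x y /\ F y t - F x t = Fu xi t * (y - x).
Proof.
  intros Dt Dx Dy HD HC.
  destruct (MVT_gen (fun v => F (clamp b v) t) x y (fun v => Fu v t)) as [c [Hc E]].
  - intros c Hc. cbv zeta in Hc. apply is_derive_Reals. intros eps Heps.
    assert (Dc : dom b c) by (apply (dom_between b x y); auto; lra).
    destruct (HD c Dc eps Heps) as [d [Hd K]].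
    assert (Hp : 0 < Rmin d (c - Rmin x y)) by (apply Rmin_pos; lra).
    exists (mkposreal _ Hp). simpl. intros h Hh0 Hh.
    assert (Hh1 : Rabs h < d) by (eapply Rlt_le_trans; [apply Hh|apply Rmin_l]).
    assert (Hh2 : Rabs h < c - Rmin x y) by (eapply Rlt_le_trans; [apply Hh|apply Rmin_r]).
    assert (Dch : dom b (c + h)).
    { apply (dom_between b x y); auto. apply Rabs_def2 in Hh2. lra. }
    rewrite !clamp_id; auto. apply K; auto. split; auto.
  - intros c Hc. apply continuity_pt_filterlim, filterlim_locally. intros eps.
    assert (Dc : dom b c) by (apply (dom_between b x y); auto; lra).
    destruct (HC c Dc eps (cond_pos eps)) as [d [Hd K]].
    exists (mkposreal d Hd). intros z Hz.
    change (Rabs (F (clamp b z) t - F (clamp b c) t) < eps).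
    rewrite (clamp_id b c Dc). apply (K (clamp b z, t)); simpl; auto using clamp_dom.
    + eapply Rle_lt_trans; [apply clamp_contract; auto|]. apply Hz.
    + rewrite Rminus_diag, Rabs_R0; auto.
  - exists c. split; [apply (dom_between b x y); auto; lra|]. split; auto.
    rewrite !clamp_id in E; auto.
Qed.

Lemma is_pderiv_u_const b F u t c : (forall s, F s t = c) -> is_pderiv_u b F u t 0.
Proof.
  intros E. refine (tends_ext _ _ _ _ _ (tends_const _ 0)).
  apply filter_forall; intros h; rewrite !E; unfold Rdiv; ring.
Qed.

Lemma is_pderiv_t_const F u t c : (forall s, F u s = c) -> is_pderiv_t F u t 0.
Proof.
  intros E. refine (tends_ext _ _ _ _ _ (tends_const _ 0)).
  apply filter_forall; intros h; rewrite !E; unfold Rdiv; ring.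
Qed.

Lemma Ck_const b k c : Ck b k (fun _ _ => c).
Proof.
  revert c; induction k; intros c; split; auto.
  - intros u t _ _; exact (tends_const _ c).
  - intros u t _ _; exact (tends_const _ c).
  - exists (fun _ _ => 0), (fun _ _ => 0). split; [|split; apply IHk].
    intros; split; [apply is_pderiv_u_const with c|apply is_pderiv_t_const with c]; auto.
Qed.

Lemma Ck_id_u b k : Ck b k (fun u _ => u).
Proof.
  assert (C : forall u t, dom b u -> 0 <= t -> cont2 b (fun u _ => u) u t).
  { intros u t _ _ e He. exists e; split; auto. }
  destruct k; split; auto.
  exists (fun _ _ => 1), (fun _ _ => 0). split; [|split; apply Ck_const].
  intros u t _ _; split.
  - refine (tends_ext _ _ _ _ _ (tends_const _ 1)).
    exists 1; split; [lra|]. intros h _ [Hh _]. field; auto.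
  - apply is_pderiv_t_const with u; auto.
Qed.

Lemma Ck_plus b k F G : Ck b k F -> Ck b k G -> Ck b k (fun u t => F u t + G u t).
Proof.
  revert F G; induction k as [|k IH]; intros F G [HcF HdF] [HcG HdG]; split;
    try (intros u t Du Dt; exact (tends_plus _ _ _ _ _ (HcF u t Du Dt) (HcG u t Du Dt))); auto.
  destruct HdF as [Fu [Ft [HF [HF1 HF2]]]]. destruct HdG as [Gu [Gt [HG [HG1 HG2]]]].
  exists (fun u t => Fu u t + Gu u t), (fun u t => Ft u t + Gt u t).
  split; [|split; apply IH; auto].
  intros u t Du Dt. destruct (HF u t Du Dt) as [A1 A2]. destruct (HG u t Du Dt) as [B1 B2].
  split; [refine (tends_ext _ _ _ _ _ (tends_plus _ _ _ _ _ A1 B1))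
         |refine (tends_ext _ _ _ _ _ (tends_plus _ _ _ _ _ A2 B2))];
  apply filter_forall; intros h; unfold Rdiv; ring.
Qed.

Lemma Ck_mult b k F G : Ck b k F -> Ck b k G -> Ck b k (fun u t => F u t * G u t).
Proof.
  revert F G; induction k as [|k IH]; intros F G HF HG.
  - destruct HF as [HcF _]; destruct HG as [HcG _]. split; auto.
    intros u t Du Dt. exact (tends_mult _ _ _ _ _ (HcF u t Du Dt) (HcG u t Du Dt)).
  - assert (HF0 := Ck_pred _ _ _ HF). assert (HG0 := Ck_pred _ _ _ HG).
    destruct HF as [HcF [Fu [Ft [HF [HF1 HF2]]]]]. destruct HG as [HcG [Gu [Gt [HG [HG1 HG2]]]]].
    split.
    { intros u t Du Dt. exact (tends_mult _ _ _ _ _ (HcF u t Du Dt) (HcG u t Du Dt)). }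
    exists (fun u t => F u t * Gu u t + G u t * Fu u t),
           (fun u t => F u t * Gt u t + G u t * Ft u t).
    split; [|split; apply Ck_plus; apply IH; auto].
    intros u t Du Dt. destruct (HF u t Du Dt) as [A1 A2]. destruct (HG u t Du Dt) as [B1 B2].
    split.
    + apply (tends_affine_approx (near0 _)) with (B := fun h => (G (u + h) t - G u t) / h)
        (C := fun h => G u t * ((F (u + h) t - F u t) / h)); [exact B1 | exact (tends_scal _ _ _ _ A1) |].
      intros e He. generalize (cont2_slice_u _ _ _ _ Dt (HcF u t Du Dt) e He).
      apply filter_imp. intros h Hh. exists (F (u + h) t). split; auto.
      destruct (Req_dec h 0) as [->|Hh0]; [unfold Rdiv; rewrite Rinv_0; ring | field; auto].
    + apply (tends_affine_approx (near0 _)) with (B := fun h => (G u (t + h) - G u t) / h)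
        (C := fun h => G u t * ((F u (t + h) - F u t) / h)); [exact B2 | exact (tends_scal _ _ _ _ A2) |].
      intros e He. generalize (cont2_slice_t _ _ _ _ Du (HcF u t Du Dt) e He).
      apply filter_imp. intros h Hh. exists (F u (t + h)). split; auto.
      destruct (Req_dec h 0) as [->|Hh0]; [unfold Rdiv; rewrite Rinv_0; ring | field; auto].
Qed.

Lemma Ck_scal b k c F : Ck b k F -> Ck b k (fun u t => c * F u t).
Proof. apply Ck_mult, Ck_const. Qed.

Lemma Ck_minus b k F G : Ck b k F -> Ck b k G -> Ck b k (fun u t => F u t - G u t).
Proof.
  intros HF HG. apply Ck_ext with (fun u t => F u t + (-1) * G u t).
  - intros; ring.
  - apply Ck_plus, Ck_scal; auto.
Qed.

Lemma Ck_sumR b k n (f : nat -> R -> R -> R) :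
  (forall j, (1 <= j <= n)%nat -> Ck b k (f j)) -> Ck b k (fun u t => sumR n (fun j => f j u t)).
Proof.
  induction n as [|n IH]; intros H; simpl.
  - apply Ck_const.
  - apply Ck_plus; [apply IH; intros; apply H|apply H]; lia.
Qed.

Lemma cont2_comp b F a u t :
  (forall u t, dom b u -> 0 <= t -> dom b (a u t)) -> dom b u -> 0 <= t ->
  cont2 b F (a u t) t -> cont2 b a u t -> cont2 b (fun u t => F (a u t) t) u t.
Proof.
  intros Da Du Dt HF Ha e He. destruct (HF e He) as [d1 [Hd1 K1]].
  destruct (Ha d1 Hd1) as [d2 [Hd2 K2]]. exists (Rmin d1 d2); split; [apply Rmin_pos; auto|].
  intros [x s] Dx Ds Hx Hs; simpl in *.
  apply (K1 (a x s, s)); simpl; auto.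
  - apply (K2 (x, s)); simpl; auto; eapply Rlt_le_trans; eauto; apply Rmin_r.
  - eapply Rlt_le_trans; eauto; apply Rmin_l.
Qed.

Section Chain.
Variables (b : bool) (F Fu a : R -> R -> R).
Hypothesis a_dom : forall u t, dom b u -> 0 <= t -> dom b (a u t).
Hypothesis F_pderiv_u : forall x s, dom b x -> 0 <= s -> is_pderiv_u b F x s (Fu x s).
Hypothesis F_cont : forall x s, dom b x -> 0 <= s -> cont2 b F x s.

(* By the mean value theorem, a difference quotient of [F (a u t) t] is [Fu xi] times one of [a],
   with [xi] between the two values of [a]. *)
Lemma is_pderiv_u_comp au u t : dom b u -> 0 <= t ->
  cont2 b Fu (a u t) t -> cont2 b a u t -> is_pderiv_u b a u t au ->
  is_pderiv_u b (fun u t => F (a u t) t) u t (Fu (a u t) t * au).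
Proof.
  intros Du Dt HFu Hac Had. unfold is_pderiv_u.
  rewrite <- (Rplus_0_r (_ * au)).
  apply (tends_affine_approx (near0 _)) with (B := fun h => (a (u + h) t - a u t) / h) (C := fun _ => 0);
    [exact Had | exact (tends_const _ _) |].
  intros e He. destruct (HFu e He) as [d1 [Hd1 K1]].
  generalize (filter_and _ _ (near0_domain _) (cont2_slice_u _ _ _ _ Dt Hac d1 Hd1)). apply filter_imp.
  intros h [[Hh0 Dh] Hh].
  destruct (mean_value_u b F Fu t (a u t) (a (u + h) t) Dt (a_dom u t Du Dt) (a_dom (u + h) t Dh Dt)
     (fun x Dx => F_pderiv_u x t Dx Dt) (fun x Dx => F_cont x t Dx Dt)) as [xi [Dxi [Hxi E]]].
  exists (Fu xi t). split.
  - apply (K1 (xi, t)); simpl; auto.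
    + eapply Rle_lt_trans; [apply Rabs_between; eauto|]; auto.
    + rewrite Rminus_diag, Rabs_R0; auto.
  - rewrite E. field; auto.
Qed.

Lemma is_pderiv_t_comp Ft at0 u t : dom b u -> 0 <= t ->
  is_pderiv_t F (a u t) t (Ft (a u t) t) ->
  cont2 b Fu (a u t) t -> cont2 b a u t -> is_pderiv_t a u t at0 ->
  is_pderiv_t (fun u t => F (a u t) t) u t (Fu (a u t) t * at0 + Ft (a u t) t).
Proof.
  intros Du Dt HFt HFu Hac Had. unfold is_pderiv_t.
  apply (tends_affine_approx (near0 _)) with (B := fun h => (a u (t + h) - a u t) / h)
    (C := fun h => (F (a u t) (t + h) - F (a u t) t) / h); [exact Had | exact HFt |].
  intros e He. destruct (HFu e He) as [d1 [Hd1 K1]].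
  generalize (filter_and _ _ (filter_and _ _ (near0_domain _) (near0_small _ _ Hd1))
    (cont2_slice_t _ _ _ _ Du Hac d1 Hd1)).
  apply filter_imp. intros h [[[Hh0 Dh] Hhs] Hh].
  destruct (mean_value_u b F Fu (t + h) (a u t) (a u (t + h)) Dh (a_dom u t Du Dt) (a_dom u (t + h) Du Dh)
     (fun x Dx => F_pderiv_u x (t + h) Dx Dh) (fun x Dx => F_cont x (t + h) Dx Dh)) as [xi [Dxi [Hxi E]]].
  exists (Fu xi (t + h)). split.
  - apply (K1 (xi, t + h)); simpl; auto.
    + eapply Rle_lt_trans; [apply Rabs_between; eauto|]; auto.
    + replace (t + h - t) with h by ring; auto.
  - replace (F (a u (t + h)) (t + h) - F (a u t) t) with
      ((F (a u (t + h)) (t + h) - F (a u t) (t + h)) + (F (a u t) (t + h) - F (a u t) t)) by ring.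
    rewrite E. field; auto.
Qed.

End Chain.

Lemma Ck_comp b k F a : Ck b k F -> Ck b k a ->
  (forall u t, dom b u -> 0 <= t -> dom b (a u t)) -> Ck b k (fun u t => F (a u t) t).
Proof.
  revert F a; induction k as [|k IH]; intros F a HF Ha Da.
  - split; auto. intros u t Du Dt.
    apply cont2_comp; auto; [apply (Ck_cont _ _ _ HF)|apply (Ck_cont _ _ _ Ha)]; auto.
  - assert (Ha0 := Ck_pred _ _ _ Ha).
    destruct HF as [HcF [Fu [Ft [HdF [HFu HFt]]]]].
    destruct Ha as [Hca [au [at0 [Hda [Hau Hat]]]]].
    split; [intros u t Du Dt; apply cont2_comp; auto|].
    exists (fun u t => Fu (a u t) t * au u t), (fun u t => Fu (a u t) t * at0 u t + Ft (a u t) t).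
    split; [|split; [apply Ck_mult|apply Ck_plus; [apply Ck_mult|]]; auto].
    intros u t Du Dt. assert (Dau := Da u t Du Dt).
    assert (HFd : forall x s, dom b x -> 0 <= s -> is_pderiv_u b F x s (Fu x s))
      by (intros; apply HdF; auto).
    split; [apply (is_pderiv_u_comp b F Fu a)|apply (is_pderiv_t_comp b F Fu a)];
      try solve [auto | apply HdF; auto | apply Hda; auto | apply (Ck_cont _ _ _ HFu); auto].
Qed.

Lemma Ck_inv b k f : Ck b k f -> (forall u t, dom b u -> 0 <= t -> f u t <> 0) ->
  Ck b k (fun u t => / f u t).
Proof.
  revert f; induction k as [|k IH]; intros f Hf Hnz.
  - split; auto. intros u t Du Dt.
    exact (tends_inv _ _ _ (Hnz u t Du Dt) (Ck_cont _ _ _ Hf u t Du Dt)).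
  - assert (Hf0 := Ck_pred _ _ _ Hf).
    destruct Hf as [Hcf [fu [ft [Hdf [Hfu Hft]]]]].
    split; [intros u t Du Dt; exact (tends_inv _ _ _ (Hnz u t Du Dt) (Hcf u t Du Dt))|].
    exists (fun u t => (-1) * (/ f u t * / f u t) * fu u t),
           (fun u t => (-1) * (/ f u t * / f u t) * ft u t).
    split; [|split; apply Ck_mult; auto; apply Ck_scal, Ck_mult; apply IH; auto].
    intros u t Du Dt. destruct (Hdf u t Du Dt) as [A1 A2].
    assert (Hf1 := Hnz u t Du Dt). split.
    + refine (tends_ext _ (fun h => (-1) * (/ f (u + h) t * / f u t) * ((f (u + h) t - f u t) / h))
        _ _ _ (tends_mult _ _ _ _ _ (tends_scal _ _ _ _ (tends_mult _ _ _ _ _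
          (tends_inv _ _ _ Hf1 (cont2_slice_u _ _ _ _ Dt (Hcf u t Du Dt))) (tends_const _ _))) A1)).
      generalize (near0_domain (adm_u b u)). apply filter_imp. intros h [Hh0 Dh].
      assert (f (u + h) t <> 0) by (apply Hnz; auto). field; auto.
    + refine (tends_ext _ (fun h => (-1) * (/ f u (t + h) * / f u t) * ((f u (t + h) - f u t) / h))
        _ _ _ (tends_mult _ _ _ _ _ (tends_scal _ _ _ _ (tends_mult _ _ _ _ _
          (tends_inv _ _ _ Hf1 (cont2_slice_t _ _ _ _ Du (Hcf u t Du Dt))) (tends_const _ _))) A2)).
      generalize (near0_domain (adm_t t)). apply filter_imp. intros h [Hh0 Dh].
      assert (f u (t + h) <> 0) by (apply Hnz; auto). field; auto.
Qed.

(** * Inverse functions in the first variable *)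

Definition slope_bounded_below b (G : R -> R -> R) : Prop :=
  forall t, 0 <= t -> exists c, 0 < c /\ forall u1 u2, dom b u1 -> dom b u2 -> u1 <= u2 ->
    c * (u2 - u1) <= G u2 t - G u1 t.

Lemma is_pderiv_u_ge b G t c u d :
  (forall u1 u2, dom b u1 -> dom b u2 -> u1 <= u2 -> c * (u2 - u1) <= G u2 t - G u1 t) ->
  dom b u -> is_pderiv_u b G u t d -> c <= d.
Proof.
  intros Hc Du Hd. apply (tends_near0_ge (adm_u b u) (adm_u_clusters b u Du) _ _ _ Hd).
  exists 1; split; [lra|]. intros h _ [Hh Dh].
  destruct (Rlt_or_le 0 h) as [Hp|Hn].
  - assert (A := Hc u (u + h) Du Dh ltac:(lra)). replace (u + h - u) with h in A by ring.
    apply (Rmult_le_reg_r h); auto. unfold Rdiv; rewrite Rmult_assoc, Rinv_l, Rmult_1_r; lra.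
  - assert (A := Hc (u + h) u Dh Du ltac:(lra)). replace (u - (u + h)) with (- h) in A by ring.
    replace ((G (u + h) t - G u t) / h) with ((G u t - G (u + h) t) / - h) by (field; auto).
    apply (Rmult_le_reg_r (- h)); [lra|].
    unfold Rdiv; rewrite Rmult_assoc, Rinv_l, Rmult_1_r; lra.
Qed.

Section InverseFunction.
Variables (b : bool) (G H : R -> R -> R).
Hypothesis G_slope : slope_bounded_below b G.
Hypothesis H_inverse : forall z t, dom b z -> 0 <= t -> dom b (H z t) /\ G (H z t) t = z.

Lemma inverse_G_mono t u1 u2 : 0 <= t -> dom b u1 -> dom b u2 -> u1 <= u2 -> G u1 t <= G u2 t.
Proof.
  intros Ht D1 D2 L. destruct (G_slope t Ht) as [c [Hc K]].
  assert (A := K u1 u2 D1 D2 L). nra.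
Qed.

Lemma inverse_G_pderiv_pos x s d : dom b x -> 0 <= s -> is_pderiv_u b G x s d -> 0 < d.
Proof.
  intros Dx Ds Hd. destruct (G_slope s Ds) as [c [Hc K]].
  assert (c <= d) by (apply (is_pderiv_u_ge b G s c x d); auto). lra.
Qed.

Lemma inverse_below x z0 t0 : dom b x -> 0 <= t0 -> cont2 b G x t0 -> z0 < G x t0 ->
  near2 b z0 t0 (fun p => H (fst p) (snd p) < x).
Proof.
  intros Dx Dt HG Hz. set (d0 := (G x t0 - z0) / 2).
  destruct (HG d0 ltac:(unfold d0; lra)) as [d1 [Hd1 K1]].
  exists (Rmin d0 d1). split; [apply Rmin_pos; unfold d0; lra|].
  intros [z s] Dz Ds Hzs Hs; simpl in *.
  assert (A1 : Rabs (G x s - G x t0) < d0).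
  { apply (K1 (x, s)); simpl; auto.
    - rewrite Rminus_diag, Rabs_R0; auto.
    - eapply Rlt_le_trans; [exact Hs|apply Rmin_r]. }
  assert (A2 : Rabs (z - z0) < d0) by (eapply Rlt_le_trans; [exact Hzs|apply Rmin_l]).
  destruct (H_inverse z s Dz Ds) as [Dy Ey].
  apply Rnot_le_lt. intros C. assert (G x s <= G (H z s) s) by (apply inverse_G_mono; auto).
  apply Rabs_def2 in A1. apply Rabs_def2 in A2. unfold d0 in *. lra.
Qed.

Lemma inverse_above x z0 t0 : dom b x -> 0 <= t0 -> cont2 b G x t0 -> G x t0 < z0 ->
  near2 b z0 t0 (fun p => x < H (fst p) (snd p)).
Proof.
  intros Dx Dt HG Hz. set (d0 := (z0 - G x t0) / 2).
  destruct (HG d0 ltac:(unfold d0; lra)) as [d1 [Hd1 K1]].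
  exists (Rmin d0 d1). split; [apply Rmin_pos; unfold d0; lra|].
  intros [z s] Dz Ds Hzs Hs; simpl in *.
  assert (A1 : Rabs (G x s - G x t0) < d0).
  { apply (K1 (x, s)); simpl; auto.
    - rewrite Rminus_diag, Rabs_R0; auto.
    - eapply Rlt_le_trans; [exact Hs|apply Rmin_r]. }
  assert (A2 : Rabs (z - z0) < d0) by (eapply Rlt_le_trans; [exact Hzs|apply Rmin_l]).
  destruct (H_inverse z s Dz Ds) as [Dy Ey].
  apply Rnot_le_lt. intros C. assert (G (H z s) s <= G x s) by (apply inverse_G_mono; auto).
  apply Rabs_def2 in A1. apply Rabs_def2 in A2. unfold d0 in *. lra.
Qed.

Hypothesis G_cont : forall u t, dom b u -> 0 <= t -> cont2 b G u t.

Lemma cont2_inverse z0 t0 : dom b z0 -> 0 <= t0 -> cont2 b H z0 t0.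
Proof.
  intros Dz Dt e He. destruct (H_inverse z0 t0 Dz Dt) as [Dh0 Eh0].
  destruct (G_slope t0 Dt) as [c [Hc K]].
  set (h0 := H z0 t0) in *.
  assert (Dxp : dom b (h0 + e / 2)) by (apply dom_add; auto; lra).
  assert (Up : near2 b z0 t0 (fun p => H (fst p) (snd p) < h0 + e / 2)).
  { apply inverse_below; auto. assert (A := K h0 (h0 + e / 2) Dh0 Dxp ltac:(lra)). nra. }
  assert (Low : near2 b z0 t0 (fun p => h0 - e / 2 < H (fst p) (snd p))).
  { destruct (classic (dom b (h0 - e / 2))) as [Dxm|NDxm].
    - apply inverse_above; auto. assert (A := K (h0 - e / 2) h0 Dxm Dh0 ltac:(lra)). nra.
    - destruct b; [|now elim NDxm]. exists 1; split; [lra|].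
      intros p Dp Dps _ _. assert (A := proj1 (H_inverse _ _ Dp Dps)). simpl in *. lra. }
  generalize (filter_and _ _ Up Low). apply filter_imp. intros p [A B]. apply Rabs_def1; lra.
Qed.

Section Derivatives.
Variables (Gu Gt : R -> R -> R).
Hypothesis G_pderiv_u : forall x s, dom b x -> 0 <= s -> is_pderiv_u b G x s (Gu x s).

Lemma inverse_Gu_neq0 z t : dom b z -> 0 <= t -> Gu (H z t) t <> 0.
Proof.
  intros Dz Dt. destruct (H_inverse z t Dz Dt) as [D0 _].
  apply Rgt_not_eq, (inverse_G_pderiv_pos (H z t) t); auto.
Qed.

Lemma is_pderiv_u_inverse z t : dom b z -> 0 <= t -> cont2 b Gu (H z t) t ->
  is_pderiv_u b H z t (/ Gu (H z t) t).
Proof.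
  intros Dz Dt HGu. assert (Hnz := inverse_Gu_neq0 z t Dz Dt).
  unfold is_pderiv_u. rewrite <- (Rplus_0_r (/ _)), <- (Rmult_1_r (/ _)).
  apply (tends_affine_approx (near0 _)) with (B := fun _ => 1) (C := fun _ => 0);
    [exact (tends_const _ _) | exact (tends_const _ _) |].
  intros e He. destruct (tends_inv _ _ _ Hnz HGu e He) as [d [Hd K]].
  generalize (filter_and _ _ (near0_domain _) (cont2_slice_u _ _ _ _ Dt (cont2_inverse z t Dz Dt) d Hd)).
  apply filter_imp. intros h [[Hh0 Dh] Hh].
  destruct (H_inverse z t Dz Dt) as [D0 E0]. destruct (H_inverse (z + h) t Dh Dt) as [D1 E1].
  destruct (mean_value_u b G Gu t (H z t) (H (z + h) t) Dt D0 D1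
     (fun x Dx => G_pderiv_u x t Dx Dt) (fun x Dx => G_cont x t Dx Dt)) as [xi [Dxi [Hxi E]]].
  rewrite E0, E1 in E. replace (z + h - z) with h in E by ring.
  assert (Hg : Gu xi t <> 0) by (intros C; rewrite C in E; lra).
  exists (/ Gu xi t). split.
  - apply (K (xi, t)); simpl; auto.
    + eapply Rle_lt_trans; [apply Rabs_between; eauto|]; auto.
    + rewrite Rminus_diag, Rabs_R0; auto.
  - set (D := H (z + h) t - H z t) in *.
    assert (D <> 0) by (intros C; rewrite C, Rmult_0_r in E; auto).
    rewrite E. field; split; auto.
Qed.

(* Differentiating [G (H z t) t = z] in [t], with the mean value theorem in the first variable. *)
Lemma is_pderiv_t_inverse z t : dom b z -> 0 <= t ->
  is_pderiv_t G (H z t) t (Gt (H z t) t) -> cont2 b Gu (H z t) t ->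
  is_pderiv_t H z t (- / Gu (H z t) t * Gt (H z t) t).
Proof.
  intros Dz Dt HGt HGu. assert (Hnz := inverse_Gu_neq0 z t Dz Dt).
  destruct (H_inverse z t Dz Dt) as [D0 E0].
  unfold is_pderiv_t. rewrite <- (Rplus_0_r (_ * Gt _ _)).
  apply (tends_affine_approx (near0 _)) with (B := fun h => (G (H z t) (t + h) - G (H z t) t) / h)
    (C := fun _ => 0); [exact HGt | exact (tends_const _ _) |].
  intros e He. destruct (tends_inv _ _ _ Hnz HGu e He) as [d [Hd K]].
  generalize (filter_and _ _ (filter_and _ _ (near0_domain _) (near0_small _ _ Hd))
    (cont2_slice_t _ _ _ _ Dz (cont2_inverse z t Dz Dt) d Hd)).
  apply filter_imp. intros h [[[Hh0 Dh] Hhs] Hh].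
  destruct (H_inverse z (t + h) Dz Dh) as [D1 E1].
  destruct (mean_value_u b G Gu (t + h) (H z t) (H z (t + h)) Dh D0 D1
     (fun x Dx => G_pderiv_u x (t + h) Dx Dh) (fun x Dx => G_cont x (t + h) Dx Dh)) as [xi [Dxi [Hxi E]]].
  assert (Hg : 0 < Gu xi (t + h)) by (apply (inverse_G_pderiv_pos xi (t + h)); auto).
  exists (- / Gu xi (t + h)). split.
  - replace (- / Gu xi (t + h) - - / Gu (H z t) t)
      with (- (/ Gu xi (t + h) - / Gu (H z t) t)) by ring.
    rewrite Rabs_Ropp. apply (K (xi, t + h)); simpl; auto.
    + eapply Rle_lt_trans; [apply Rabs_between; eauto|]; auto.
    + replace (t + h - t) with h by ring; auto.
  - assert (Z : G (H z (t + h)) (t + h) - G (H z t) (t + h) + (G (H z t) (t + h) - G (H z t) t) = 0).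
    { rewrite E0, E1; ring. }
    rewrite E in Z.
    replace (G (H z t) (t + h) - G (H z t) t) with (- (Gu xi (t + h) * (H z (t + h) - H z t))) by lra.
    field. split; auto; lra.
Qed.

End Derivatives.

Lemma Ck_inverse k : Ck b k G -> Ck b k H.
Proof.
  intros HG. induction k as [|k IH]; [split; auto using cont2_inverse|].
  specialize (IH (Ck_pred _ _ _ HG)).
  destruct HG as [_ [Gu [Gt [HGd [HGu HGt]]]]].
  assert (HGd_u : forall x s, dom b x -> 0 <= s -> is_pderiv_u b G x s (Gu x s))
    by (intros; apply HGd; auto).
  assert (DH : forall z t, dom b z -> 0 <= t -> dom b (H z t)) by (intros; apply H_inverse; auto).
  assert (Hrec : Ck b k (fun z t => / Gu (H z t) t)).
  { apply Ck_inv; [apply Ck_comp; auto|]. apply inverse_Gu_neq0; auto. }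
  split; auto using cont2_inverse.
  exists (fun z t => / Gu (H z t) t), (fun z t => - / Gu (H z t) t * Gt (H z t) t).
  split; [|split; auto].
  - intros z t Dz Dt. split.
    + apply is_pderiv_u_inverse; auto. apply (Ck_cont _ _ _ HGu); auto.
    + apply is_pderiv_t_inverse; auto; [apply HGd|apply (Ck_cont _ _ _ HGu)]; auto.
  - apply Ck_ext with (fun z t => (-1) * (/ Gu (H z t) t) * Gt (H z t) t); [intros; ring|].
    apply Ck_mult; [apply Ck_scal|apply Ck_comp]; auto.
Qed.

End InverseFunction.

Lemma Ck_comp_inverse b k F G H : Ck b k F -> Ck b k G -> slope_bounded_below b G ->
  (forall z t, dom b z -> 0 <= t -> dom b (H z t) /\ G (H z t) t = z) ->
  Ck b k (fun z t => F (H z t) t).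
Proof.
  intros HF HG Hs HH. apply Ck_comp; auto.
  - apply (Ck_inverse b G H); auto. apply (Ck_cont _ _ _ HG).
  - intros; apply HH; auto.
Qed.

(** * Comparison with the regularity classes of the statement *)

Lemma filterlim_within0_tends (P : R -> Prop) (f : R -> R) (v : R) :
  filterlim f (within P (locally 0)) (locally v) <-> tends (near0 P) f v.
Proof.
  rewrite filterlim_locally. split.
  - intros H e He. destruct (H (mkposreal e He)) as [d Hd].
    exists d; split; [apply cond_pos|]. intros h Hh Ph. apply Hd; auto.
    change (Rabs (h - 0) < d). rewrite Rminus_0_r; auto.
  - intros H e. destruct (H e (cond_pos e)) as [d [Hd K]]. exists (mkposreal d Hd).
    intros h Hh Ph. apply K; auto. change (Rabs (h - 0) < d) in Hh. rewrite Rminus_0_r in Hh; auto.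
Qed.

Lemma filterlim_quad_cont2 g u t :
  filterlim (fun p : R * R => g (fst p) (snd p)) (within quad (locally (u, t))) (locally (g u t))
  <-> cont2 true g u t.
Proof.
  rewrite filterlim_locally. split.
  - intros H e He. destruct (H (mkposreal e He)) as [d Hd].
    exists d; split; [apply cond_pos|]. intros p D1 D2 H1 H2. apply Hd; split; auto.
  - intros H e. destruct (H e (cond_pos e)) as [d [Hd K]]. exists (mkposreal d Hd).
    intros p [H1 H2] [D1 D2]. apply K; auto.
Qed.

Lemma Ck_of_pderiv_family q : forall (g : R -> R -> R) (D : list bool -> R -> R -> R),
  (forall u t, 0 <= u -> 0 <= t -> D nil u t = g u t) ->
  (forall l u t, (length l < q)%nat -> 0 <= u -> 0 <= t ->
        pderiv_u (D l) u t (D (true :: l) u t) /\ pderiv_t (D l) u t (D (false :: l) u t)) ->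
  (forall l u t, (length l <= q)%nat -> 0 <= u -> 0 <= t ->
        filterlim (fun p : R * R => D l (fst p) (snd p))
          (within quad (locally (u, t))) (locally (D l u t))) ->
  Ck true q g.
Proof.
  induction q as [|q IH]; intros g D H0 Hd Hc; apply Ck_ext with (D nil); auto;
    (split; [intros u t Du Dt; apply filterlim_quad_cont2, Hc; simpl; auto; lia|]); auto.
  exists (D (true :: nil)), (D (false :: nil)). split; [|split].
  - intros u t Du Dt. destruct (Hd nil u t) as [A B]; simpl; auto; try lia.
    split; apply filterlim_within0_tends; auto.
  - apply (IH _ (fun l => D (l ++ true :: nil))); auto; intros l u t Hl Du Dt;
      [apply (Hd (l ++ true :: nil))|apply (Hc (l ++ true :: nil))]; auto;
      rewrite length_app; simpl; lia.
  - apply (IH _ (fun l => D (l ++ false :: nil))); auto; intros l u t Hl Du Dt;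
      [apply (Hd (l ++ false :: nil))|apply (Hc (l ++ false :: nil))]; auto;
      rewrite length_app; simpl; lia.
Qed.

Lemma Cq_quad_Ck q g : Cq_quad q g -> Ck true q g.
Proof. intros [_ [D [H0 [Hd Hc]]]]. eapply Ck_of_pderiv_family; eauto. Qed.

(* The derivative family demanded by [Cq_quad]; each derivative is picked by choice, which is harmless
   since one-sided partial derivatives are unique on the quadrant. *)
Fixpoint pderiv_tower (g : R -> R -> R) (l : list bool) : R -> R -> R :=
  match l with
  | nil => g
  | b :: l' => epsilon (inhabits (fun _ _ : R => 0))
      (fun Gd => forall u t, 0 <= u -> 0 <= t ->
         if b then is_pderiv_u true (pderiv_tower g l') u t (Gd u t)
         else is_pderiv_t (pderiv_tower g l') u t (Gd u t))
  end.

Lemma pderiv_tower_spec q g l : Ck true (S q) (pderiv_tower g l) ->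
  (forall u t, 0 <= u -> 0 <= t ->
     is_pderiv_u true (pderiv_tower g l) u t (pderiv_tower g (true :: l) u t)) /\
  (forall u t, 0 <= u -> 0 <= t ->
     is_pderiv_t (pderiv_tower g l) u t (pderiv_tower g (false :: l) u t)) /\
  Ck true q (pderiv_tower g (true :: l)) /\ Ck true q (pderiv_tower g (false :: l)).
Proof.
  intros [_ [Fu [Ft [HD [HFu HFt]]]]]. simpl.
  match goal with |- (forall u t, _ -> _ -> _ _ _ _ _ (epsilon ?i ?P u t)) /\ _ =>
    assert (SU : P (epsilon i P)) by (apply epsilon_spec; exists Fu; intros; apply HD; auto) end.
  match goal with |- _ /\ (forall u t, _ -> _ -> _ _ _ _ (epsilon ?i ?P u t)) /\ _ =>
    assert (ST : P (epsilon i P)) by (apply epsilon_spec; exists Ft; intros; apply HD; auto) end.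
  repeat split; auto.
  - apply Ck_ext with Fu; auto. intros u t Du Dt.
    apply (is_pderiv_u_unique true (pderiv_tower g l) u t); auto. apply HD; auto.
  - apply Ck_ext with Ft; auto. intros u t Du Dt.
    apply (is_pderiv_t_unique (pderiv_tower g l) u t); auto. apply HD; auto.
Qed.

Lemma Ck_pderiv_tower q g : Ck true q g -> forall l, (length l <= q)%nat ->
  Ck true (q - length l) (pderiv_tower g l).
Proof.
  intros Hg l. induction l as [|b l IH]; intros Hl; [rewrite Nat.sub_0_r; auto|].
  simpl in Hl. specialize (IH ltac:(lia)).
  replace (q - length l)%nat with (S (q - length (b :: l))) in IH by (simpl; lia).
  destruct (pderiv_tower_spec _ _ _ IH) as [_ [_ [Hu Ht]]]. destruct b; auto.
Qed.

Lemma Ck_Cq_quad q g : (forall u t, 0 <= u -> 0 <= t -> 0 <= g u t) -> Ck true q g -> Cq_quad q g.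
Proof.
  intros Hpos Hg. split; auto. exists (pderiv_tower g). split; [|split].
  - reflexivity.
  - intros l u t Hl Du Dt.
    assert (H := Ck_pderiv_tower q g Hg l ltac:(lia)).
    replace (q - length l)%nat with (S (q - S (length l))) in H by lia.
    destruct (pderiv_tower_spec _ _ _ H) as [Hu [Ht _]].
    split; apply filterlim_within0_tends; [apply Hu|apply Ht]; auto.
  - intros l u t Hl Du Dt. apply filterlim_quad_cont2.
    apply (Ck_cont _ _ _ (Ck_pderiv_tower q g Hg l Hl)); auto.
Qed.

Lemma cont2_within_Rp F u t : 0 <= t -> cont2 true F u t ->
  filterlim (fun x => F x t) (within Rp (locally u)) (locally (F u t)).
Proof.
  intros Ht H. apply filterlim_locally. intros e.
  destruct (H e (cond_pos e)) as [d [Hd K]]. exists (mkposreal d Hd). intros y Hy Py.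
  apply (K (y, t)); simpl; [exact Py|exact Ht|exact Hy|rewrite Rminus_diag, Rabs_R0; auto].
Qed.

Lemma is_derive_is_pderiv_u f x t l : is_derive f x l <-> is_pderiv_u false (fun u _ => f u) x t l.
Proof.
  rewrite is_derive_Reals. split.
  - intros H e He. destruct (H e He) as [d Hd]. exists d; split; [apply cond_pos|].
    intros h Hh [Hh0 _]. apply Hd; auto.
  - intros H e He. destruct (H e He) as [d [Hd K]]. exists (mkposreal d Hd).
    intros h Hh0 Hh. apply K; auto. split; simpl; auto.
Qed.

Lemma continuous_cont2 f x t : 0 <= t -> continuous f x <-> cont2 false (fun u _ => f u) x t.
Proof.
  intros Ht. unfold continuous. rewrite filterlim_locally. split.
  - intros H e He. destruct (H (mkposreal e He)) as [d Hd].
    exists d; split; [apply cond_pos|]. intros p _ _ Hp _. apply Hd. exact Hp.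
  - intros H e. destruct (H e (cond_pos e)) as [d [Hd K]]. exists (mkposreal d Hd). intros y Hy.
    apply (K (y, t)); simpl; auto; try exact Hy. rewrite Rminus_diag, Rabs_R0; auto.
Qed.

Lemma Cq_R_Ck q f : Cq_R q f -> Ck false q (fun u _ => f u).
Proof.
  intros [Hex Hc].
  assert (forall m k, (k + m = q)%nat -> Ck false m (fun u _ => Derive_n f k u)).
  { induction m as [|m IH]; intros k Hk.
    - rewrite Nat.add_0_r in Hk; subst k. split; auto. intros u t _ Dt.
      apply (continuous_cont2 (Derive_n f q) u t Dt); auto.
    - split.
      + intros u t _ Dt. apply (continuous_cont2 (Derive_n f k) u t Dt).
        exact (ex_derive_continuous (Derive_n f k) u (Hex (S k) u ltac:(lia))).
      + exists (fun u _ => Derive_n f (S k) u), (fun _ _ => 0). split; [|split].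
        * intros u t _ Dt. split.
          -- apply (is_derive_is_pderiv_u (Derive_n f k)), Derive_correct, (Hex (S k)); lia.
          -- apply is_pderiv_t_const with (Derive_n f k u); auto.
        * apply IH; lia.
        * apply Ck_const. }
  apply Ck_ext with (fun u _ => Derive_n f 0 u); auto.
Qed.

Lemma Ck_Cq_R q : forall f, Ck false q (fun u _ => f u) -> Cq_R q f.
Proof.
  induction q as [|q IH]; intros f Hf.
  - split.
    + intros k x Hk. replace k with 0%nat by lia. simpl; auto.
    + intros x. apply (continuous_cont2 _ x 0 (Rle_refl 0)). apply (Ck_cont _ _ _ Hf); simpl; auto; lra.
  - destruct Hf as [Hc [Fu [Ft [HD [HFu _]]]]].
    set (f1 := fun u => Fu u 0).
    assert (Hd : forall x, is_derive f x (f1 x)).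
    { intros x. apply (is_derive_is_pderiv_u f x 0). apply HD; simpl; auto; lra. }
    assert (E : forall u t, dom false u -> 0 <= t -> Fu u t = f1 u).
    { intros u t Du Dt. apply (is_pderiv_u_unique false (fun u _ => f u) u t); auto.
      - apply HD; auto.
      - apply (is_derive_is_pderiv_u f u t), Hd. }
    destruct (IH f1 (Ck_ext _ _ _ E _ HFu)) as [Hex1 Hc1].
    assert (DE : forall j x, Derive_n f (S j) x = Derive_n f1 j x).
    { induction j as [|j IHj]; intros x; simpl.
      - apply is_derive_unique, Hd.
      - apply Derive_ext. intros y. apply IHj. }
    split.
    + intros [|[|k]] x Hk; simpl; auto.
      * exists (f1 x). apply Hd.
      * apply ex_derive_ext with (Derive_n f1 k); [intros y; symmetry; apply DE|].
        apply (Hex1 (S k)); lia.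
    + intros x. apply continuous_ext with (Derive_n f1 q); [intros y; symmetry; apply DE|].
      apply Hc1.
Qed.

(** * The maps phi_i at a fixed time *)

Lemma sumR_ext n a b : (forall j, (1 <= j <= n)%nat -> a j = b j) -> sumR n a = sumR n b.
Proof. induction n; intros H; simpl; auto. rewrite IHn, (H (S n)); auto; intros; try apply H; lia. Qed.

Lemma sumR_le n a b : (forall j, (1 <= j <= n)%nat -> a j <= b j) -> sumR n a <= sumR n b.
Proof.
  induction n; intros H; simpl; [lra|].
  apply Rplus_le_compat; [apply IHn; intros|]; apply H; lia.
Qed.

Lemma sumR_plus n a b : sumR n (fun j => a j + b j) = sumR n a + sumR n b.
Proof. induction n; simpl; [ring|]. rewrite IHn; ring. Qed.

Lemma sumR_scal n c a : sumR n (fun j => c * a j) = c * sumR n a.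
Proof. induction n; simpl; [ring|]. rewrite IHn; ring. Qed.

Lemma sumR_minus n a b : sumR n (fun j => a j - b j) = sumR n a - sumR n b.
Proof. induction n; simpl; [ring|]. rewrite IHn; ring. Qed.

Lemma sumR_zero n a : (forall j, (1 <= j <= n)%nat -> a j = 0) -> sumR n a = 0.
Proof.
  induction n; intros H; simpl; [reflexivity|].
  rewrite IHn, H; [ring|lia|intros; apply H; lia].
Qed.

Lemma sumR_nonneg n a : (forall j, (1 <= j <= n)%nat -> 0 <= a j) -> 0 <= sumR n a.
Proof. intros H. rewrite <- (sumR_zero n (fun _ => 0)) by auto. apply sumR_le; auto. Qed.

Lemma sumR_delta n m (a : nat -> R) : (1 <= m <= n)%nat ->
  sumR n (fun j => if Nat.eqb j m then a j else 0) = a m.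
Proof.
  induction n as [|n IH]; intros Hm; [lia|]. cbn [sumR].
  destruct (Nat.eqb_spec (S n) m) as [E|E].
  - subst. rewrite sumR_zero; [ring|]. intros j Hj. destruct (Nat.eqb_spec j (S n)); [lia|auto].
  - rewrite IH by lia. ring.
Qed.

Lemma sumRbar_ext n a b : (forall j, (1 <= j <= n)%nat -> a j = b j) -> sumRbar n a = sumRbar n b.
Proof. induction n; intros H; simpl; auto. rewrite IHn, (H (S n)); auto; intros; try apply H; lia. Qed.

Lemma sumRbar_finite n (g : nat -> Rbar) :
  (forall i, (1 <= i <= n)%nat -> Rbar_le 0 (g i)) -> sumRbar n g <> p_infty ->
  exists s : nat -> R, (forall i, (1 <= i <= n)%nat -> g i = Finite (s i)) /\
     sumRbar n g = Finite (sumR n s).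
Proof.
  induction n as [|n IH]; intros Hpos Hf.
  - exists (fun _ => 0). split; [intros; lia|reflexivity].
  - simpl in Hf. assert (Hg := Hpos (S n) ltac:(lia)).
    destruct IH as [s [Hs Es]]; [intros; apply Hpos; lia| |].
    { intros E. rewrite E in Hf. destruct (g (S n)); simpl in Hg; auto. }
    rewrite Es in Hf.
    destruct (g (S n)) as [c| |] eqn:Ec; [|now elim Hf|now elim Hg].
    exists (fun i => if Nat.eqb i (S n) then c else s i).
    assert (Ei : sumR n (fun i => if Nat.eqb i (S n) then c else s i) = sumR n s).
    { apply sumR_ext. intros j Hj. destruct (Nat.eqb_spec j (S n)); [lia|auto]. }
    split.
    + intros i Hi. destruct (Nat.eqb_spec i (S n)); [subst; auto|]. apply Hs; lia.
    + simpl. rewrite Nat.eqb_refl, Ei, Es, Ec. reflexivity.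
Qed.

Lemma Rbar_mult_pos_finite x r y : 0 < x -> Rbar_le 0 r -> Rbar_mult (Finite x) r = Finite y ->
  exists z, r = Finite z /\ y = x * z /\ 0 <= z.
Proof.
  intros Hx Hr E. destruct r as [z| |]; simpl in Hr; [|exfalso|contradiction].
  - exists z. injection E; auto.
  - unfold Rbar_mult, Rbar_mult' in E.
    destruct (Rle_dec 0 x); [|lra]. destruct (Rle_lt_or_eq_dec 0 x r); [discriminate|lra].
Qed.

Lemma Rbar_mult_pos_ge0 x r : 0 < x -> Rbar_le 0 r -> Rbar_le 0 (Rbar_mult (Finite x) r).
Proof.
  intros Hx Hr. destruct r as [z| |]; simpl in *; [apply Rmult_le_pos; lra| |contradiction].
  unfold Rbar_mult, Rbar_mult'.
  destruct (Rle_dec 0 x); [|lra]. destruct (Rle_lt_or_eq_dec 0 x r); simpl; auto. lra.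
Qed.

Lemma IVT_Rp (g : R -> R) U z : (forall u, 0 <= u -> cont2 true (fun u _ => g u) u 0) ->
  0 <= U -> g 0 <= z <= g U -> exists u, 0 <= u <= U /\ g u = z.
Proof.
  intros Hc HU Hz.
  assert (Hcont : continuity (fun x => g (Rmax 0 x))).
  { intros x. apply continuity_pt_filterlim, filterlim_locally. intros e.
    destruct (Hc (Rmax 0 x) (Rmax_l _ _) e (cond_pos e)) as [d [Hd K]].
    exists (mkposreal d Hd). intros y Hy.
    apply (K (Rmax 0 y, 0)); simpl; [apply Rmax_l|lra| |rewrite Rminus_diag, Rabs_R0; auto].
    eapply Rle_lt_trans; [|exact Hy]. change (Rabs (Rmax 0 y - Rmax 0 x) <= Rabs (y - x)).
    unfold Rmax. destruct (Rle_dec 0 y); destruct (Rle_dec 0 x);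
      unfold Rabs; repeat destruct Rcase_abs; lra. }
  destruct (IVT_gen _ 0 U z Hcont) as [x [Hx Ex]].
  - rewrite Rmax_left, Rmax_right by lra. unfold Rmin, Rmax; destruct Rle_dec; lra.
  - exists (Rmax 0 x). rewrite Rmin_left, Rmax_right in Hx by lra.
    split; [split; [apply Rmax_l|apply Rmax_lub; lra]|auto].
Qed.

Lemma classC_Ck0 g : classC g -> Ck true 0 (fun u _ => g u).
Proof.
  intros [_ [_ [Hc _]]]. split; auto. intros u t Hu _ e He.
  destruct (proj1 (filterlim_locally g (g u)) (Hc u Hu) (mkposreal e He)) as [d Hd].
  exists d; split; [apply cond_pos|]. intros p D1 D2 H1 H2. apply Hd; auto.
Qed.

Lemma Ck_phi b q I (F : nat -> R -> R -> R) i :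
  (forall j, (1 <= j <= I)%nat -> Ck b q (F j)) ->
  Ck b q (fun u t => phi I (fun j u => F j u t) i u).
Proof.
  intros HF. unfold phi. apply Ck_minus; [apply Ck_id_u|].
  apply (Ck_sumR b q I (fun j u t => 2 * INR (Nat.min i j) * F j u t)).
  intros j Hj. apply Ck_scal; auto.
Qed.

Lemma phi_increment I psi i u1 u2 : phi I psi i u2 - phi I psi i u1 =
  u2 - u1 - sumR I (fun j => 2 * INR (Nat.min i j) * (psi j u2 - psi j u1)).
Proof.
  unfold phi.
  enough (E : sumR I (fun j => 2 * INR (Nat.min i j) * (psi j u2 - psi j u1)) =
    sumR I (fun j => 2 * INR (Nat.min i j) * psi j u2) - sumR I (fun j => 2 * INR (Nat.min i j) * psi j u1))
    by (rewrite E; ring).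
  rewrite <- sumR_minus. apply sumR_ext. intros; ring.
Qed.

Lemma phi_0 I psi u : phi I psi 0 u = u.
Proof. unfold phi. rewrite sumR_zero; [ring|]. intros j _. simpl. ring. Qed.

Section FixedTime.
Variables (I : nat) (psi : nat -> R -> R).
Hypothesis psi_F : inF I psi.

Lemma psi_classC i : (1 <= i <= I)%nat -> classC (psi i).
Proof. intros; apply psi_F; auto. Qed.

Lemma psi_mono_increment j u1 u2 : (1 <= j <= I)%nat -> 0 <= u1 -> u1 <= u2 -> 0 <= psi j u2 - psi j u1.
Proof. intros Hj H1 H2. assert (A := proj2 (proj2 (proj2 (psi_classC j Hj))) u1 u2 H1 H2). lra. Qed.

Lemma phi_at0 i : phi I psi i 0 = 0.
Proof.
  unfold phi. rewrite sumR_zero; [ring|]. intros j Hj. rewrite (proj1 (psi_classC j Hj)). ring.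
Qed.

Lemma phi_increment_le i u1 u2 : (i <= I)%nat -> 0 <= u1 -> u1 <= u2 ->
  phi I psi I u2 - phi I psi I u1 <= phi I psi i u2 - phi I psi i u1.
Proof.
  intros Hi H1 H2. rewrite !phi_increment.
  enough (sumR I (fun j => 2 * INR (Nat.min i j) * (psi j u2 - psi j u1)) <=
          sumR I (fun j => 2 * INR (Nat.min I j) * (psi j u2 - psi j u1))) by lra.
  apply sumR_le. intros j Hj. apply Rmult_le_compat_r; [apply psi_mono_increment; auto|].
  apply Rmult_le_compat_l; [lra|]. apply le_INR; lia.
Qed.

Lemma phi_increment_le_id i u1 u2 : 0 <= u1 -> u1 <= u2 -> phi I psi i u2 - phi I psi i u1 <= u2 - u1.
Proof.
  intros H1 H2. rewrite phi_increment.
  enough (0 <= sumR I (fun j => 2 * INR (Nat.min i j) * (psi j u2 - psi j u1))) by lra.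
  apply sumR_nonneg. intros j Hj. apply Rmult_le_pos; [|apply psi_mono_increment; auto].
  generalize (pos_INR (Nat.min i j)); lra.
Qed.

Lemma phi_strict_incr i u1 u2 : (i <= I)%nat -> 0 <= u1 -> u1 < u2 -> phi I psi i u1 < phi I psi i u2.
Proof.
  intros Hi H1 H2. assert (A := proj1 (proj2 (proj2 psi_F)) u1 u2 H1 H2).
  assert (B := phi_increment_le i u1 u2 Hi H1 (Rlt_le _ _ H2)). lra.
Qed.

Lemma phi_nonneg i u : (i <= I)%nat -> 0 <= u -> 0 <= phi I psi i u.
Proof.
  intros Hi Hu. rewrite <- (phi_at0 i). destruct (Req_dec u 0) as [->|Hn]; [lra|].
  left. apply phi_strict_incr; auto; lra.
Qed.

Lemma phi_inj i u1 u2 : (i <= I)%nat -> 0 <= u1 -> 0 <= u2 -> phi I psi i u1 = phi I psi i u2 -> u1 = u2.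
Proof.
  intros Hi H1 H2 E. destruct (Rtotal_order u1 u2) as [L|[L|L]]; auto;
    apply (phi_strict_incr i) in L; auto; lra.
Qed.

Lemma phi_surj i z : (i <= I)%nat -> 0 <= z -> exists u, 0 <= u /\ phi I psi i u = z.
Proof.
  intros Hi Hz. assert (Hl := proj2 (proj2 (proj2 psi_F))).
  apply is_lim_spec in Hl. destruct (Hl z) as [N HN].
  set (U := Rmax 0 N + 1).
  assert (HU : 0 <= U) by (unfold U; generalize (Rmax_l 0 N); lra).
  assert (HzU : z < phi I psi I U) by (apply HN; unfold U; generalize (Rmax_r 0 N); lra).
  assert (HzU' := phi_increment_le i 0 U Hi (Rle_refl 0) HU). rewrite !phi_at0 in HzU'.
  destruct (IVT_Rp (phi I psi i) U z) as [u [Hu Eu]]; auto.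
  - intros u Hu. apply (Ck_cont _ _ _ (Ck_phi true 0 I (fun j u _ => psi j u) i
      (fun j Hj => classC_Ck0 _ (psi_classC j Hj)))); simpl; auto; lra.
  - rewrite phi_at0; lra.
  - exists u; split; [lra|auto].
Qed.

Lemma inv_Rp_phi_spec i z : (i <= I)%nat -> 0 <= z ->
  0 <= inv_Rp (phi I psi i) z /\ phi I psi i (inv_Rp (phi I psi i) z) = z.
Proof. intros Hi Hz. unfold inv_Rp. apply epsilon_spec, phi_surj; auto. Qed.

Lemma inv_Rp_phi i u : (i <= I)%nat -> 0 <= u -> inv_Rp (phi I psi i) (phi I psi i u) = u.
Proof.
  intros Hi Hu. destruct (inv_Rp_phi_spec i (phi I psi i u) Hi (phi_nonneg i u Hi Hu)) as [A B].
  apply (phi_inj i); auto.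
Qed.

Lemma Upsilon_phi i u : (i <= I)%nat -> 0 <= u -> Upsilon I psi i (phi I psi i u) = psi i u.
Proof. intros Hi Hu. unfold Upsilon. rewrite inv_Rp_phi; auto. Qed.

Lemma supq_supbar i : (1 <= i <= I)%nat -> supq I psi i = supbar (Upsilon I psi i).
Proof.
  intros Hi. apply Lub_Rbar_eqset. intros r. split.
  - intros [u1 [u2 [H1 [H2 [H3 ->]]]]].
    exists (phi I psi i u1), (phi I psi i u2).
    repeat split; try (apply phi_nonneg; auto; lia).
    + intros E. apply H3. apply (phi_inj i); auto; lia.
    + rewrite !Upsilon_phi; auto; lia.
  - intros [z1 [z2 [H1 [H2 [H3 ->]]]]].
    destruct (inv_Rp_phi_spec i z1 ltac:(lia) H1) as [A1 B1].
    destruct (inv_Rp_phi_spec i z2 ltac:(lia) H2) as [A2 B2].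
    exists (inv_Rp (phi I psi i) z1), (inv_Rp (phi I psi i) z2). repeat split; auto.
    + intros E. apply H3. rewrite <- B1, <- B2, E; auto.
    + unfold Upsilon. rewrite B1, B2. auto.
Qed.

Lemma Upsilon_at0 i : (1 <= i <= I)%nat -> Upsilon I psi i 0 = 0.
Proof. intros Hi. rewrite <- (phi_at0 i) at 1. rewrite Upsilon_phi; [apply psi_classC|lia|lra]; auto. Qed.

Lemma Upsilon_nonneg i z : (1 <= i <= I)%nat -> 0 <= z -> 0 <= Upsilon I psi i z.
Proof. intros Hi Hz. apply psi_classC; auto. apply inv_Rp_phi_spec; auto; lia. Qed.

Lemma Upsilon_mono i z1 z2 : (1 <= i <= I)%nat -> 0 <= z1 -> z1 <= z2 ->
  Upsilon I psi i z1 <= Upsilon I psi i z2.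
Proof.
  intros Hi H1 H2. unfold Upsilon.
  destruct (inv_Rp_phi_spec i z1 ltac:(lia) H1) as [A1 B1].
  destruct (inv_Rp_phi_spec i z2 ltac:(lia) ltac:(lra)) as [A2 B2].
  apply psi_classC; auto. apply Rnot_lt_le. intros L.
  apply (phi_strict_incr i) in L; auto; [lra|lia].
Qed.

End FixedTime.

Lemma supq_nonneg I psi i : inF I psi -> (1 <= i <= I)%nat -> Rbar_le 0 (supq I psi i).
Proof.
  intros HF Hi.
  apply Rbar_le_trans with (Finite ((psi i 1 - psi i 0) / (phi I psi i 1 - phi I psi i 0))).
  2:{ apply Lub_Rbar_correct. exists 1, 0. repeat split; lra. }
  simpl. apply Rmult_le_pos.
  - apply (psi_mono_increment I psi HF); auto; lra.
  - apply Rlt_le, Rinv_0_lt_compat.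
    generalize (phi_strict_incr I psi HF i 0 1 ltac:(lia) ltac:(lra) ltac:(lra)). lra.
Qed.

Lemma psi_increment_le_supq I psi j z u1 u2 : inF I psi -> (1 <= j <= I)%nat ->
  supq I psi j = Finite z -> 0 <= u1 -> u1 <= u2 -> psi j u2 - psi j u1 <= z * (u2 - u1).
Proof.
  intros HF Hj Ez H1 H2.
  assert (Hz : 0 <= z) by (generalize (supq_nonneg I psi j HF Hj); rewrite Ez; auto).
  destruct (Req_dec u1 u2) as [<-|Hne]; [rewrite !Rminus_diag; lra|].
  assert (Hp : 0 < phi I psi j u2 - phi I psi j u1)
    by (generalize (phi_strict_incr I psi HF j u1 u2 ltac:(lia) H1 ltac:(lra)); lra).
  assert (Hr : (psi j u2 - psi j u1) / (phi I psi j u2 - phi I psi j u1) <= z).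
  { change (Rbar_le (Finite ((psi j u2 - psi j u1) / (phi I psi j u2 - phi I psi j u1))) (Finite z)).
    rewrite <- Ez. apply Lub_Rbar_correct. exists u2, u1. repeat split; auto; lra. }
  apply (Rmult_le_compat_r (phi I psi j u2 - phi I psi j u1)) in Hr; [|lra].
  unfold Rdiv in Hr. rewrite Rmult_assoc, Rinv_l, Rmult_1_r in Hr by lra.
  assert (Hl := phi_increment_le_id I psi HF j u1 u2 H1 H2).
  assert (z * (phi I psi j u2 - phi I psi j u1) <= z * (u2 - u1)) by (apply Rmult_le_compat_l; lra).
  lra.
Qed.

(* The slope of [phi_i] is at least [1 - 2 sum_j j sup_j], which the smallness condition of [inD]
   makes positive. *)
Lemma inD_phi_slope I psi : inF I psi ->
  Rbar_lt (sumRbar I (fun i => Rbar_mult (INR i) (supq I psi i))) (Finite (1 / 2)) ->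
  exists eps, 0 < eps <= 1 /\ forall i, (1 <= i <= I)%nat -> forall u1 u2, 0 <= u1 -> u1 <= u2 ->
    eps * (u2 - u1) <= phi I psi i u2 - phi I psi i u1.
Proof.
  intros HF Hlt.
  assert (Hpos : forall i, (1 <= i <= I)%nat -> Rbar_le 0 (Rbar_mult (INR i) (supq I psi i))).
  { intros i Hi. apply Rbar_mult_pos_ge0; [apply lt_0_INR; lia|apply supq_nonneg; auto]. }
  destruct (sumRbar_finite I _ Hpos) as [s [Hs Es]]; [intros E; rewrite E in Hlt; auto|].
  rewrite Es in Hlt; simpl in Hlt.
  assert (Hz : forall j, (1 <= j <= I)%nat -> exists z, supq I psi j = Finite z /\ s j = INR j * z /\ 0 <= z).
  { intros j Hj. apply Rbar_mult_pos_finite; [apply lt_0_INR; lia|apply supq_nonneg|apply Hs]; auto. }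
  assert (Hs0 : 0 <= sumR I s).
  { apply sumR_nonneg. intros j Hj. destruct (Hz j Hj) as [z [_ [-> Hz0]]].
    apply Rmult_le_pos; auto using pos_INR. }
  exists (1 - 2 * sumR I s). split; [lra|].
  intros i Hi u1 u2 H1 H2. rewrite phi_increment.
  enough (sumR I (fun j => 2 * INR (Nat.min i j) * (psi j u2 - psi j u1)) <=
          sumR I (fun j => (2 * (u2 - u1)) * s j)) by (rewrite sumR_scal in *; lra).
  apply sumR_le. intros j Hj. destruct (Hz j Hj) as [z [Ez [-> Hz0]]].
  assert (Hd := psi_increment_le_supq I psi j z u1 u2 HF Hj Ez H1 H2).
  assert (Hm : INR (Nat.min i j) <= INR j) by (apply le_INR; lia).
  assert (INR (Nat.min i j) * (psi j u2 - psi j u1) <= INR j * (z * (u2 - u1))).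
  { apply Rmult_le_compat; auto using pos_INR. apply (psi_mono_increment I psi HF); auto. }
  lra.
Qed.

(** * Recovering phi from psibar *)

(* With [P j = psibar_j] and [w = phi_I u], the pair is [(phi_(I-n) u, S_(I-n) u)], S_k being the tail
   sum [sum_(j >= k) psi_j]; see [phi_descent_phi]. *)
Fixpoint phi_descent (I : nat) (P : nat -> R -> R -> R) (n : nat) (w t : R) : R * R :=
  match n with
  | O => (w, P I w t)
  | S n' => let (x, s) := phi_descent I P n' w t in
            (x + 2 * s, s + P (I - S n')%nat (x + 2 * s) t)
  end.

Section PhiDescent.
Variables (I : nat) (P : nat -> R -> R -> R) (b : bool).
Hypothesis P_nonneg : forall j z t, (1 <= j <= I)%nat -> dom b z -> 0 <= t -> 0 <= P j z t.
Hypothesis P_mono : forall j z1 z2 t, (1 <= j <= I)%nat -> dom b z1 -> z1 <= z2 -> 0 <= t ->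
  P j z1 t <= P j z2 t.

Lemma phi_descent_S n w t : phi_descent I P (S n) w t =
  let x := fst (phi_descent I P n w t) + 2 * snd (phi_descent I P n w t) in
  (x, snd (phi_descent I P n w t) + P (I - S n)%nat x t).
Proof. simpl. destruct (phi_descent I P n w t); reflexivity. Qed.

Lemma phi_descent_mono n : (n < I)%nat -> forall w1 w2 t, dom b w1 -> w1 <= w2 -> 0 <= t ->
  w2 - w1 <= fst (phi_descent I P n w2 t) - fst (phi_descent I P n w1 t) /\
  snd (phi_descent I P n w1 t) <= snd (phi_descent I P n w2 t) /\
  0 <= snd (phi_descent I P n w1 t) /\ w1 <= fst (phi_descent I P n w1 t).
Proof.
  induction n as [|n IH]; intros Hn w1 w2 t D1 H12 Ht; [simpl|rewrite !phi_descent_S; simpl].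
  - repeat split; try lra; [apply P_mono|apply P_nonneg]; auto; lia.
  - destruct (IH ltac:(lia) w1 w2 t D1 H12 Ht) as [A [B [C E]]].
    set (x1 := fst (phi_descent I P n w1 t) + 2 * snd (phi_descent I P n w1 t)).
    set (x2 := fst (phi_descent I P n w2 t) + 2 * snd (phi_descent I P n w2 t)).
    assert (Dx1 : dom b x1)
      by (replace x1 with (w1 + (x1 - w1)) by ring; apply dom_add; auto; unfold x1; lra).
    assert (P1 := P_mono (I - S n) x1 x2 t ltac:(lia) Dx1 ltac:(unfold x1, x2; lra) Ht).
    assert (P2 := P_nonneg (I - S n) x1 t ltac:(lia) Dx1 Ht).
    unfold x1, x2 in *. lra.
Qed.

Lemma phi_descent_fst n : (n <= I)%nat -> forall w1 w2 t, dom b w1 -> w1 <= w2 -> 0 <= t ->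
  w2 - w1 <= fst (phi_descent I P n w2 t) - fst (phi_descent I P n w1 t) /\
  w1 <= fst (phi_descent I P n w1 t).
Proof.
  destruct n as [|n]; intros Hn w1 w2 t D1 H12 Ht; [simpl; lra|].
  destruct (phi_descent_mono n ltac:(lia) w1 w2 t D1 H12 Ht) as [A [B [C E]]].
  rewrite !phi_descent_S; simpl. lra.
Qed.

Lemma phi_descent_dom n : (n <= I)%nat -> forall w t, dom b w -> 0 <= t ->
  dom b (fst (phi_descent I P n w t)).
Proof.
  intros Hn w t Dw Dt. destruct (phi_descent_fst n Hn w w t Dw (Rle_refl _) Dt) as [_ A].
  replace (fst (phi_descent I P n w t)) with (w + (fst (phi_descent I P n w t) - w)) by ring.
  apply dom_add; auto; lra.
Qed.

Lemma phi_descent_slope n : (n <= I)%nat -> slope_bounded_below b (fun w t => fst (phi_descent I P n w t)).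
Proof.
  intros Hn t Ht. exists 1. split; [lra|]. intros u1 u2 D1 _ L.
  destruct (phi_descent_fst n Hn u1 u2 t D1 L Ht). lra.
Qed.

Section Regularity.
Variable k : nat.
Hypothesis P_Ck : forall j, (1 <= j <= I)%nat -> Ck b k (P j).

Lemma Ck_phi_descent n : (n < I)%nat ->
  Ck b k (fun w t => fst (phi_descent I P n w t)) /\ Ck b k (fun w t => snd (phi_descent I P n w t)).
Proof.
  induction n as [|n IH]; intros Hn.
  - split; [apply Ck_id_u|apply P_Ck; lia].
  - destruct (IH ltac:(lia)) as [A B].
    assert (C : Ck b k (fun w t => fst (phi_descent I P (S n) w t))).
    { apply Ck_ext with (fun w t => fst (phi_descent I P n w t) + 2 * snd (phi_descent I P n w t));
        [intros; rewrite phi_descent_S; reflexivity|].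
      apply Ck_plus, Ck_scal; auto. }
    split; auto.
    apply Ck_ext with (fun w t =>
      snd (phi_descent I P n w t) + P (I - S n)%nat (fst (phi_descent I P (S n) w t)) t);
      [intros; rewrite !phi_descent_S; reflexivity|].
    apply Ck_plus; auto.
    apply (Ck_comp b k (P (I - S n)%nat) (fun w t => fst (phi_descent I P (S n) w t))); auto.
    + apply P_Ck; lia.
    + intros; apply phi_descent_dom; auto; lia.
Qed.

Lemma Ck_phi_descent_fst n : (n <= I)%nat -> Ck b k (fun w t => fst (phi_descent I P n w t)).
Proof.
  intros Hn. destruct n as [|n]; [apply Ck_id_u|].
  destruct (Ck_phi_descent n ltac:(lia)) as [A B].
  apply Ck_ext with (fun w t => fst (phi_descent I P n w t) + 2 * snd (phi_descent I P n w t));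
    [intros; rewrite phi_descent_S; reflexivity|].
  apply Ck_plus, Ck_scal; auto.
Qed.

Variable H : R -> R -> R.
Hypothesis H_inverse : forall u t, dom b u -> 0 <= t ->
  dom b (H u t) /\ fst (phi_descent I P I (H u t) t) = u.

Lemma Ck_descent_comp i : (1 <= i <= I)%nat ->
  Ck b k (fun u t => P i (fst (phi_descent I P (I - i) (H u t) t)) t).
Proof.
  intros Hi. apply (Ck_comp b k (P i)); auto.
  - apply (Ck_comp_inverse b k (fun w t => fst (phi_descent I P (I - i) w t))
      (fun w t => fst (phi_descent I P I w t))); auto using phi_descent_slope;
      apply Ck_phi_descent_fst; auto; lia.
  - intros u t Du Dt. apply phi_descent_dom; auto; [lia|apply H_inverse; auto].
Qed.

End Regularity.
End PhiDescent.

Definition tail_sum (I : nat) (psi : nat -> R -> R) (k : nat) (u : R) : R :=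
  sumR I (fun j => if Nat.leb k j then psi j u else 0).

Lemma phi_pred I psi k u : (1 <= k)%nat -> phi I psi (k - 1) u = phi I psi k u + 2 * tail_sum I psi k u.
Proof.
  intros Hk. unfold phi, tail_sum. rewrite <- sumR_scal.
  enough (sumR I (fun j => 2 * INR (Nat.min (k - 1) j) * psi j u) =
     sumR I (fun j => 2 * INR (Nat.min k j) * psi j u - 2 * (if Nat.leb k j then psi j u else 0)))
    by (rewrite H, sumR_minus; ring).
  apply sumR_ext. intros j Hj. destruct (Nat.leb_spec k j).
  - rewrite !Nat.min_l by lia. replace k with (S (k - 1)) at 2 by lia. rewrite S_INR. ring.
  - rewrite !Nat.min_r by lia. ring.
Qed.

Lemma tail_sum_pred I psi k u : (1 <= k - 1 <= I)%nat ->
  tail_sum I psi (k - 1) u = tail_sum I psi k u + psi (k - 1)%nat u.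
Proof.
  intros Hk. unfold tail_sum. rewrite <- (sumR_delta I (k - 1) (fun j => psi j u)) by lia.
  rewrite <- sumR_plus. apply sumR_ext. intros j Hj.
  destruct (Nat.leb_spec (k - 1) j); destruct (Nat.leb_spec k j); destruct (Nat.eqb_spec j (k - 1));
    try lia; ring.
Qed.

Lemma tail_sum_top I psi u : (1 <= I)%nat -> tail_sum I psi I u = psi I u.
Proof.
  intros HI. unfold tail_sum. rewrite <- (sumR_delta I I (fun j => psi j u)) by lia.
  apply sumR_ext. intros j Hj.
  destruct (Nat.leb_spec I j); destruct (Nat.eqb_spec j I); try lia; subst; auto.
Qed.

Lemma phi_descent_phi I psi P t u : (1 <= I)%nat ->
  (forall j, (1 <= j <= I)%nat -> P j (phi I psi j u) t = psi j u) ->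
  forall n, (n <= I)%nat -> fst (phi_descent I P n (phi I psi I u) t) = phi I psi (I - n) u.
Proof.
  intros HI HP.
  assert (A : forall n, (n < I)%nat ->
     phi_descent I P n (phi I psi I u) t = (phi I psi (I - n) u, tail_sum I psi (I - n) u)).
  { induction n as [|n IH]; intros Hn.
    - simpl. rewrite Nat.sub_0_r, HP, tail_sum_top; auto; lia.
    - simpl. rewrite IH by lia.
      replace (I - S n)%nat with ((I - n) - 1)%nat by lia.
      rewrite <- phi_pred, HP, tail_sum_pred by lia. reflexivity. }
  intros [|n] Hn; [simpl; rewrite Nat.sub_0_r; reflexivity|].
  rewrite phi_descent_S, A by lia. simpl.
  replace (I - S n)%nat with ((I - n) - 1)%nat by lia. rewrite phi_pred by lia. reflexivity.
Qed.

Lemma phi_descent_neg I P t w : (forall j, (1 <= j <= I)%nat -> P j w t = 0) ->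
  forall n, (n <= I)%nat -> fst (phi_descent I P n w t) = w.
Proof.
  intros HP.
  assert (A : forall n, (n < I)%nat -> phi_descent I P n w t = (w, 0)).
  { induction n as [|n IH]; intros Hn; simpl.
    - rewrite HP; auto; lia.
    - rewrite IH by lia. rewrite Rmult_0_r, Rplus_0_r, HP by lia. f_equal; ring. }
  intros [|n] Hn; [reflexivity|]. rewrite phi_descent_S, A by lia. simpl. ring.
Qed.

(** * The equivalence *)

Lemma ext0_pos g z : 0 <= z -> ext0 g z = g z.
Proof. intros H. unfold ext0. destruct (Rle_dec 0 z); [auto|lra]. Qed.

Lemma ext0_neg g z : z < 0 -> ext0 g z = 0.
Proof. intros H. unfold ext0. destruct (Rle_dec 0 z); [lra|auto]. Qed.

Lemma ext0_nonneg g z : classC g -> 0 <= ext0 g z.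
Proof. intros Hg. unfold ext0. destruct (Rle_dec 0 z); [apply Hg; auto|lra]. Qed.

Lemma ext0_mono g z1 z2 : classC g -> z1 <= z2 -> ext0 g z1 <= ext0 g z2.
Proof.
  intros Hg H. unfold ext0. destruct (Rle_dec 0 z1); destruct (Rle_dec 0 z2); try lra;
    apply Hg; auto; lra.
Qed.

Lemma classCq_Ck q g : classCq q g -> Ck false q (fun u _ => ext0 g u).
Proof. intros [_ H]. apply Cq_R_Ck; auto. Qed.

Lemma phi_ext0 I psi i u :
  phi I (fun j u => ext0 (psi j) u) i u = if Rle_dec 0 u then phi I psi i u else u.
Proof.
  unfold phi. destruct (Rle_dec 0 u).
  - f_equal. apply sumR_ext. intros j _. rewrite ext0_pos; auto.
  - rewrite sumR_zero; [ring|]. intros j _. rewrite ext0_neg; [ring|lra].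
Qed.

Lemma slope_glue_id g eps : 0 < eps <= 1 -> g 0 = 0 ->
  (forall u1 u2, 0 <= u1 -> u1 <= u2 -> eps * (u2 - u1) <= g u2 - g u1) ->
  forall u1 u2, u1 <= u2 ->
  eps * (u2 - u1) <= (if Rle_dec 0 u2 then g u2 else u2) - (if Rle_dec 0 u1 then g u1 else u1).
Proof.
  intros He g0 Hg u1 u2 L.
  destruct (Rle_dec 0 u1); destruct (Rle_dec 0 u2); try lra; [auto| |nra].
  assert (A := Hg 0 u2 (Rle_refl 0) ltac:(lra)). rewrite g0 in A. nra.
Qed.

Section Equivalence.
Variables (I q : nat) (psi : nat -> R -> R -> R).
Hypothesis psi_F : forall t, 0 <= t -> inF I (fun i u => psi i u t).

Let psibar i z t := Upsilon I (fun j u => psi j u t) i z.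

Lemma psibar_phi i u t : (1 <= i <= I)%nat -> 0 <= u -> 0 <= t ->
  psibar i (phi I (fun j u => psi j u t) i u) t = psi i u t.
Proof. intros Hi Hu Ht. apply (Upsilon_phi I _ (psi_F t Ht)); auto; lia. Qed.

Section FromPsi.
Hypothesis psi_Dq : forall t, 0 <= t -> inDq q I (fun i u => psi i u t).
Hypothesis psi_Cq : forall i, (1 <= i <= I)%nat -> Cq_quad q (psi i).

Lemma psi_phi_slope t : 0 <= t -> exists eps, 0 < eps <= 1 /\
  forall i, (1 <= i <= I)%nat -> forall u1 u2, 0 <= u1 -> u1 <= u2 ->
    eps * (u2 - u1) <= phi I (fun j u => psi j u t) i u2 - phi I (fun j u => psi j u t) i u1.
Proof. intros Ht. apply inD_phi_slope; [apply psi_F|apply (psi_Dq t Ht)]; auto. Qed.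

Lemma Ck_psibar i : (1 <= i <= I)%nat -> Ck true q (psibar i).
Proof.
  intros Hi. apply (Ck_comp_inverse true q (psi i) (fun u t => phi I (fun j u => psi j u t) i u)).
  - apply Cq_quad_Ck, psi_Cq; auto.
  - apply Ck_phi. intros; apply Cq_quad_Ck, psi_Cq; auto.
  - intros t Ht. destruct (psi_phi_slope t Ht) as [eps [He K]].
    exists eps; split; [lra|]. intros u1 u2 D1 _ L; apply K; auto.
  - intros z t Dz Dt. apply (inv_Rp_phi_spec I _ (psi_F t Dt)); simpl in *; auto; lia.
Qed.

Lemma classC_psibar t i : 0 <= t -> (1 <= i <= I)%nat -> classC (fun z => psibar i z t).
Proof.
  intros Ht Hi. repeat split.
  - apply (Upsilon_at0 I _ (psi_F t Ht)); auto.
  - intros z Hz. apply (Upsilon_nonneg I _ (psi_F t Ht)); auto.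
  - intros u Hu. apply (cont2_within_Rp (psibar i) u t Ht), (Ck_cont _ _ _ (Ck_psibar i Hi)); auto.
  - intros z1 z2 H1 H2. apply (Upsilon_mono I _ (psi_F t Ht)); auto.
Qed.

(* In one variable, [phi_i] extended by the identity on the negative axis has the extension of
   [Upsilon_i] as inverse; both are C^q on R. *)
Lemma classCq_psibar t i : 0 <= t -> (1 <= i <= I)%nat -> classCq q (fun z => psibar i z t).
Proof.
  intros Ht Hi. split; [apply classC_psibar; auto|]. apply Ck_Cq_R.
  set (f := fun j u => psi j u t).
  set (Pe := fun j u (_ : R) => ext0 (f j) u).
  set (H := fun z (_ : R) => if Rle_dec 0 z then inv_Rp (phi I f i) z else z).
  assert (Hinv : forall z, 0 <= z -> 0 <= inv_Rp (phi I f i) z /\ phi I f i (inv_Rp (phi I f i) z) = z)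
    by (intros; apply (inv_Rp_phi_spec I f (psi_F t Ht)); auto; lia).
  apply Ck_ext with (fun z s => Pe i (H z s) s).
  { intros z s _ _. unfold Pe, H. destruct (Rle_dec 0 z).
    - rewrite !ext0_pos; [reflexivity|auto|apply Hinv; auto].
    - rewrite !ext0_neg; auto; lra. }
  apply (Ck_comp_inverse false q (Pe i) (fun u s => phi I (fun j u => Pe j u s) i u)).
  - apply classCq_Ck, (psi_Dq t Ht); auto.
  - apply Ck_phi. intros j Hj. apply classCq_Ck, (psi_Dq t Ht); auto.
  - intros s _. destruct (psi_phi_slope t Ht) as [eps [He K]].
    exists eps; split; [lra|]. intros u1 u2 _ _ L. unfold Pe. rewrite !phi_ext0.
    apply slope_glue_id; auto. apply (phi_at0 I f (psi_F t Ht)).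
  - intros z s _ _. split; [constructor|]. unfold Pe, H. rewrite phi_ext0.
    destruct (Rle_dec 0 z) as [Hz|Hz]; [|destruct (Rle_dec 0 z); [lra|reflexivity]].
    destruct (Hinv z Hz) as [A B]. destruct (Rle_dec 0 (inv_Rp (phi I f i) z)); [auto|lra].
Qed.

Lemma Cq_quad_psibar i : (1 <= i <= I)%nat -> Cq_quad q (psibar i).
Proof.
  intros Hi. apply Ck_Cq_quad; [|apply Ck_psibar; auto].
  intros u t Hu Ht. apply (Upsilon_nonneg I _ (psi_F t Ht)); auto.
Qed.

Lemma inDbarq_psibar t : 0 <= t -> inDbarq q I (fun i z => psibar i z t).
Proof.
  intros Ht. destruct (psi_Dq t Ht) as [[_ HD] _].
  repeat split; intros; try apply classC_psibar; try apply classCq_psibar; auto.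
  erewrite sumRbar_ext; [apply HD|]. intros j Hj. simpl. f_equal.
  unfold psibar. rewrite <- supq_supbar; auto.
Qed.

End FromPsi.

Section FromPsibar.
Hypothesis psibar_Dq : forall t, 0 <= t -> inDbarq q I (fun i z => psibar i z t).
Hypothesis psibar_Cq : forall i, (1 <= i <= I)%nat -> Cq_quad q (psibar i).

Lemma psibar_Dq_classC t j : 0 <= t -> (1 <= j <= I)%nat -> classC (fun z => psibar j z t).
Proof. intros Ht Hj. apply (psibar_Dq t Ht); auto. Qed.

Lemma Ck_psi i : (1 <= i <= I)%nat -> Ck true q (psi i).
Proof.
  intros Hi.
  set (phit t := phi I (fun j u => psi j u t)).
  assert (Hdesc : forall n u t, (n <= I)%nat -> 0 <= u -> 0 <= t ->
    fst (phi_descent I psibar n (phit t I u) t) = phit t (I - n)%nat u).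
  { intros n u t Hn Hu Ht. apply phi_descent_phi; auto; [lia|]. intros; apply psibar_phi; auto. }
  apply Ck_ext with (fun u t => psibar i (fst (phi_descent I psibar (I - i) (phit t I u) t)) t).
  { intros u t Hu Ht. rewrite Hdesc by (auto; lia). replace (I - (I - i))%nat with i by lia.
    apply psibar_phi; auto. }
  apply (Ck_descent_comp I psibar true) with (H := fun u t => phit t I u); auto.
  - intros j z t Hj Dz Dt. apply (psibar_Dq_classC t j); auto.
  - intros j z1 z2 t Hj Dz L Dt. apply (psibar_Dq_classC t j); auto.
  - intros j Hj. apply Cq_quad_Ck, psibar_Cq; auto.
  - intros u t Du Dt. split; [apply (phi_nonneg I _ (psi_F t Dt)); auto|].
    rewrite Hdesc, Nat.sub_diag; auto. apply phi_0.
Qed.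

Lemma classCq_psi t i : 0 <= t -> (1 <= i <= I)%nat -> classCq q (fun u => psi i u t).
Proof.
  intros Ht Hi. split; [apply (psi_F t Ht); auto|]. apply Ck_Cq_R.
  set (f := fun j u => psi j u t).
  set (Pe := fun j z (_ : R) => ext0 (fun z => psibar j z t) z).
  set (H := fun u (_ : R) => if Rle_dec 0 u then phi I f I u else u).
  assert (Hdesc : forall n u s, (n <= I)%nat -> 0 <= u ->
    fst (phi_descent I Pe n (phi I f I u) s) = phi I f (I - n) u).
  { intros n u s Hn Hu. apply phi_descent_phi; auto; [lia|]. intros j Hj. unfold Pe.
    rewrite ext0_pos by (apply (phi_nonneg I f (psi_F t Ht)); auto; lia). apply psibar_phi; auto. }
  assert (Hneg : forall n u s, (n <= I)%nat -> u < 0 -> fst (phi_descent I Pe n u s) = u).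
  { intros n u s Hn Hu. apply phi_descent_neg; auto. intros j Hj. apply ext0_neg; auto. }
  apply Ck_ext with (fun u s => Pe i (fst (phi_descent I Pe (I - i) (H u s) s)) s).
  { intros u s _ _. unfold H. destruct (Rle_dec 0 u).
    - rewrite Hdesc by (auto; lia). replace (I - (I - i))%nat with i by lia. unfold Pe.
      rewrite !ext0_pos; [apply psibar_phi; auto|auto|apply (phi_nonneg I f (psi_F t Ht)); auto; lia].
    - rewrite Hneg by (lia || lra). unfold Pe. rewrite !ext0_neg; auto; lra. }
  apply (Ck_descent_comp I Pe false) with (H := H); auto.
  - intros j z s Hj _ _. apply ext0_nonneg, psibar_Dq_classC; auto.
  - intros j z1 z2 s Hj _ L _. apply ext0_mono; auto. apply psibar_Dq_classC; auto.
  - intros j Hj. apply classCq_Ck, (psibar_Dq t Ht); auto.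
  - intros u s _ _. split; [constructor|]. unfold H. destruct (Rle_dec 0 u).
    + rewrite Hdesc, Nat.sub_diag; auto. apply phi_0.
    + apply Hneg; auto; lra.
Qed.

Lemma Cq_quad_psi i : (1 <= i <= I)%nat -> Cq_quad q (psi i).
Proof.
  intros Hi. apply Ck_Cq_quad; [|apply Ck_psi; auto].
  intros u t Hu Ht. apply (psi_F t Ht); auto.
Qed.

Lemma inDq_psi t : 0 <= t -> inDq q I (fun i u => psi i u t).
Proof.
  intros Ht. destruct (psibar_Dq t Ht) as [[_ HD] _].
  repeat split; intros; try apply psi_F; try apply classCq_psi; auto.
  erewrite sumRbar_ext; [apply HD|]. intros j Hj. simpl. f_equal.
  unfold psibar. rewrite supq_supbar; auto.
Qed.

End FromPsibar.
End Equivalence.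

Theorem lemma6p4 (I q : nat) (psi : nat -> R -> R -> R)
  (Hpsi : forall t, 0 <= t -> inF I (fun i u => psi i u t)) :
  let psibar := fun i z t => Upsilon I (fun j u => psi j u t) i z in
  ((forall t, 0 <= t -> inDq q I (fun i u => psi i u t)) /\
   (forall i, (1 <= i <= I)%nat -> Cq_quad q (psi i)))
  <->
  ((forall t, 0 <= t -> inDbarq q I (fun i z => psibar i z t)) /\
   (forall i, (1 <= i <= I)%nat -> Cq_quad q (psibar i))).
Proof.
  intros psibar. split.
  - intros [Hpsi_D Hpsi_C]. split.
    + intros t Ht. exact (inDbarq_psibar I q psi Hpsi Hpsi_D Hpsi_C t Ht).
    + intros i Hi. exact (Cq_quad_psibar I q psi Hpsi Hpsi_D Hpsi_C i Hi).
  - intros [Hbar_D Hbar_C]. split.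
    + intros t Ht. exact (inDq_psi I q psi Hpsi Hbar_D t Ht).
    + intros i Hi. exact (Cq_quad_psi I q psi Hpsi Hbar_D Hbar_C i Hi).
Qed.
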